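(* Let $X, Y \subseteq \omega$. There exists an embedding $\mathcal{K}_2^X \to \mathcal{B}^Y$ if and only if $X \le_T Y$.
   Context: A partial combinatory algebra (pca) is a set $A$ with a partial binary application $\cdot$ containing distinct elements $\mathrm{s},\mathrm{k}$ with $\mathrm{k}ab\downarrow = a$, $\mathrm{s}ab\downarrow$, and $\mathrm{s}abc \simeq (ac)(bc)$. Given pcas $\mathcal{A},\mathcal{B}$, an embedding $\mathcal{A}\hookrightarrow\mathcal{B}$ is an injection $f$ such that whenever $aa'\downarrow$ in $\mathcal{A}$, $f(a)f(a')\downarrow = f(aa')$. Kleene's second model $\mathcal{K}_2$ is taken with carrier $\omega^\omega$ and application $g\cdot h = \Phi^{g\oplus h}_{g(0)}$, where $\Phi_e$ is the $e$-th Turing functional and $g\cdot h$ is defined iff the function on the right is total. Van Oosten's sequential computation model $\mathcal{B}$ is the same definition but with carrier the set of partial functions $\omega\rightharpoonup\omega$ (application always defined). For $X\subseteq\omega$, $\mathcal{K}_2^X$ is the sub-pca of $X$-computable total functions and $\mathcal{B}^X$ the sub-pca of partial $X$-computable functions. *)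

From Stdlib Require Import Arith List.
Import ListNotations.

Inductive code : Type :=
| cZero : code
| cSucc : code
| cProj : nat -> code            (* i-th argument (0 if absent) *)
| cOrac : code
| cComp : code -> codes -> code
| cPrec : code -> code -> code   (* primitive recursion on first argument *)
| cMin  : code -> code
with codes : Type :=
| cnil : codes
| ccons : code -> codes -> codes.

(** Big-step semantics relative to a partial oracle [o : nat -> option nat].
    Querying the oracle at a point where it is undefined diverges
    (sequential computation). *)
Inductive ev (o : nat -> option nat) : code -> list nat -> nat -> Prop :=
| evZero a : ev o cZero a 0
| evSucc a : ev o cSucc a (S (hd 0 a))
| evProj i a : ev o (cProj i) a (nth i a 0)
| evOrac a y : o (hd 0 a) = Some y -> ev o cOrac a y
| evComp f gs a bs y : evs o gs a bs -> ev o f bs y -> ev o (cComp f gs) a y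
| evPrec0 f g a y : ev o f a y -> ev o (cPrec f g) (0 :: a) y
| evPrecS f g n a z y :
    ev o (cPrec f g) (n :: a) z -> ev o g (n :: z :: a) y ->
    ev o (cPrec f g) (S n :: a) y
| evMin f a n :
    ev o f (n :: a) 0 ->
    (forall m, m < n -> exists k, ev o f (m :: a) (S k)) ->
    ev o (cMin f) a n
with evs (o : nat -> option nat) : codes -> list nat -> list nat -> Prop :=
| evsNil a : evs o cnil a nil
| evsCons g gs a y ys : ev o g a y -> evs o gs a ys -> evs o (ccons g gs) a (y :: ys).

Definition cpair (a b : nat) : nat := (a + b) * (a + b + 1) / 2 + b.

Fixpoint enc (c : code) : nat :=
  match c with
  | cZero => cpair 0 0
  | cSucc => cpair 1 0
  | cProj i => cpair 2 i
  | cOrac => cpair 3 0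
  | cComp f gs => cpair 4 (cpair (enc f) (encs gs))
  | cPrec f g => cpair 5 (cpair (enc f) (enc g))
  | cMin f => cpair 6 (enc f)
  end
with encs (gs : codes) : nat :=
  match gs with
  | cnil => 0
  | ccons g gs' => S (cpair (enc g) (encs gs'))
  end.

(** [Phi o e n m] : the e-th Turing functional with oracle [o], on input [n],
    halts with output [m].  (Indices that code no program give the
    nowhere-defined functional.) *)
Definition Phi (o : nat -> option nat) (e n m : nat) : Prop :=
  exists c, enc c = e /\ ev o c [n] m.

Definition join (g h : nat -> option nat) (n : nat) : option nat :=
  if Nat.even n then g (Nat.div2 n) else h (Nat.div2 n).

Definition tot (g : nat -> nat) : nat -> option nat := fun n => Some (g n).

(** Subsets of omega are represented by their (boolean) characteristic
    functions. *)
Definition chi (X : nat -> bool) : nat -> nat := fun n => if X n then 1 else 0.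

Definition turing_le (X Y : nat -> bool) : Prop :=
  exists e, forall n, Phi (tot (chi Y)) e n (chi X n).

Definition appK2 (g h k : nat -> nat) : Prop :=
  forall n, Phi (join (tot g) (tot h)) (g 0) n (k n).

(** [appB f h k] : f . h = k  (if f(0) is undefined, f . h is the empty
    function). *)
Definition appB (f h k : nat -> option nat) : Prop :=
  forall n m, k n = Some m <->
    exists e, f 0 = Some e /\ Phi (join f h) e n m.

Definition comp_tot (X : nat -> bool) (g : nat -> nat) : Prop :=
  exists e, forall n, Phi (tot (chi X)) e n (g n).

Definition comp_part (Y : nat -> bool) (f : nat -> option nat) : Prop :=
  exists e, forall n m, f n = Some m <-> Phi (tot (chi Y)) e n m.

Definition K2X (X : nat -> bool) : Type := { g : nat -> nat | comp_tot X g }.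
Definition BY (Y : nat -> bool) : Type := { f : nat -> option nat | comp_part Y f }.

Definition embedding_K2X_BY (X Y : nat -> bool) (F : K2X X -> BY Y) : Prop :=
  (forall a b, F a = F b -> a = b) /\
  (forall a a' c : K2X X, appK2 (proj1_sig a) (proj1_sig a') (proj1_sig c) ->
     appB (proj1_sig (F a)) (proj1_sig (F a')) (proj1_sig (F c))).

(* If [X] is Turing reducible to [Y], every [X]-computable total function is a
   [Y]-computable partial one, and [g |-> g] is an embedding because application
   in K2 and in B agree on total functions.

   Conversely, let [F] embed K2^X into B^Y.  K2^X contains numerals [n], a
   successor [s], two distinct constants [a], [b], and elements [d0], [d1] with
   [d0 . n = if X n then a else b] and [d1 . n = if X n then b else a].  Their
   images are [Y]-computable partial functions, [F n] arises from [F 0] by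
   iterating [F s], and [F a], [F b] differ at some [x0], say [F a x0 = v].
   Then [X n] holds iff the sequential computation [F d0 . F n] outputs [v] at
   [x0], and fails iff [F d1 . F n] does.  A halting computation, together with
   the nested computations answering its oracle queries, has a finite
   derivation, and being a derivation is primitive recursive in [Y]; so
   searching for the least derivation of one of the two facts decides [X n]
   from [Y]. *)

From Stdlib Require Import Arith Bool List Lia Setoid Morphisms.
From Stdlib Require Import FunctionalExtensionality ProofIrrelevance Classical.
Import ListNotations.

(** * Pairing and codes *)

Scheme code_mut := Induction for code Sort Prop
with codes_mut := Induction for codes Sort Prop.
Combined Scheme code_codes_ind from code_mut, codes_mut.

Definition prim_rec (f : nat -> nat -> nat) (b : nat) : nat -> nat :=
  fix r n := match n with 0 => b | S n => f n (r n) end.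

#[export] Instance prim_rec_proper :
  Proper (pointwise_relation nat (pointwise_relation nat eq) ==> eq ==> eq ==> eq) prim_rec.
Proof. intros f f' Hf b _ <- n _ <-. induction n; simpl; congruence. Qed.

Lemma prim_rec_S f b n : prim_rec f b (S n) = f n (prim_rec f b n).
Proof. reflexivity. Qed.

Fixpoint tri (n : nat) : nat := match n with 0 => 0 | S n => tri n + S n end.

Definition npair (a b : nat) : nat := tri (a + b) + b.

Definition diag (z : nat) : nat :=
  prim_rec (fun n acc => acc + (if tri (S n) <=? z then 1 else 0)) 0 z.
Definition unpair2 (z : nat) : nat := z - tri (diag z).
Definition unpair1 (z : nat) : nat := diag z - unpair2 z.

Lemma tri_le_mono a b : a <= b -> tri a <= tri b.
Proof. induction 1; simpl; lia. Qed.

Lemma le_tri n : n <= tri n.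
Proof. induction n; simpl; lia. Qed.

Lemma diag_spec z s : tri s <= z < tri (S s) -> diag z = s.
Proof.
  intros [Hlo Hhi].
  assert (Hcount : forall n, n <= z ->
    prim_rec (fun n acc => acc + (if tri (S n) <=? z then 1 else 0)) 0 n = Nat.min n s).
  { induction n as [|n IH]; intros Hn; [reflexivity|].
    rewrite prim_rec_S, IH by lia.
    destruct (Nat.leb_spec (tri (S n)) z) as [Hle|Hgt].
    - assert (n < s) by (destruct (Nat.lt_ge_cases n s); [|pose proof (tri_le_mono (S s) (S n))]; lia).
      lia.
    - assert (s <= n) by (destruct (Nat.lt_ge_cases n s); [pose proof (tri_le_mono (S n) s)|]; lia).
      lia. }
  unfold diag. rewrite Hcount by lia. pose proof (le_tri s). lia.
Qed.

Lemma diag_exists z : exists s, tri s <= z < tri (S s).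
Proof.
  induction z as [|z [s Hs]]; [exists 0; simpl; lia|]. simpl in Hs.
  destruct (Nat.eq_dec (S z) (tri s + S s)); [exists (S s) | exists s]; simpl; lia.
Qed.

Lemma diag_npair a b : diag (npair a b) = a + b.
Proof. apply diag_spec. unfold npair. simpl. lia. Qed.

Lemma unpair1_npair a b : unpair1 (npair a b) = a.
Proof. unfold unpair1, unpair2. rewrite diag_npair. unfold npair. lia. Qed.

Lemma unpair2_npair a b : unpair2 (npair a b) = b.
Proof. unfold unpair2. rewrite diag_npair. unfold npair. lia. Qed.

Lemma npair_unpair z : npair (unpair1 z) (unpair2 z) = z.
Proof.
  destruct (diag_exists z) as [s Hs]. pose proof (diag_spec z s Hs) as Hd.
  unfold unpair1, unpair2, npair. rewrite Hd. simpl in Hs.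
  replace (s - (z - tri s) + (z - tri s)) with s by lia. lia.
Qed.

Lemma npair_inj a b a' b' : npair a b = npair a' b' -> a = a' /\ b = b'.
Proof.
  intros H. pose proof (f_equal unpair1 H) as H1. pose proof (f_equal unpair2 H) as H2.
  rewrite !unpair1_npair in H1. rewrite !unpair2_npair in H2. auto.
Qed.

Lemma unpair2_le z : unpair2 z <= z.
Proof. unfold unpair2. lia. Qed.

Lemma le_npair_r a b : b <= npair a b.
Proof. unfold npair. lia. Qed.

Lemma tri_halves n : tri n = n * (n + 1) / 2.
Proof.
  assert (H : n * (n + 1) = tri n * 2) by (induction n; simpl; nia).
  rewrite H, Nat.div_mul; lia.
Qed.

Lemma cpair_npair a b : cpair a b = npair a b.
Proof. unfold cpair, npair. rewrite tri_halves. reflexivity. Qed.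

Lemma enc_inj_all :
  (forall c c', enc c = enc c' -> c = c') /\ (forall gs gs', encs gs = encs gs' -> gs = gs').
Proof.
  apply code_codes_ind;
    [intros c' | intros c' | intros i c' | intros c' | intros f IHf gs IHgs c'
    | intros f IHf g IHg c' | intros f IHf c' | intros gs' | intros g IHg gs IHgs gs'];
    first [destruct c' | destruct gs']; simpl; rewrite ?cpair_npair; intros H; try discriminate;
    repeat match goal with
           | H : S _ = S _ |- _ => injection H as H
           | H : npair _ _ = npair _ _ |- _ => apply npair_inj in H as [? ?]
           end;
    subst; try discriminate; f_equal; auto.
Qed.

Lemma enc_inj c c' : enc c = enc c' -> c = c'.
Proof. apply enc_inj_all. Qed.

Lemma Phi_enc o c n m : Phi o (enc c) n m <-> ev o c [n] m.
Proof.
  split; [intros [c' [Hc Hev]]; apply enc_inj in Hc; subst; exact Hev | intros Hev; exists c; auto].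
Qed.

Lemma ev_det_all o :
  (forall c a y y', ev o c a y -> ev o c a y' -> y = y') /\
  (forall gs a ys ys', evs o gs a ys -> evs o gs a ys' -> ys = ys').
Proof.
  apply code_codes_ind.
  1-4, 8: intros * H1 H2; inversion H1; inversion H2; congruence.
  - intros f IHf gs IHgs a y y' H1 H2.
    inversion H1 as [| | | |? ? ? bs1 ? Hgs1 Hf1| | |]; subst.
    inversion H2 as [| | | |? ? ? bs2 ? Hgs2 Hf2| | |]; subst.
    assert (bs1 = bs2) as <- by eauto. eauto.
  - intros f IHf g IHg a y y' H1. revert y'.
    remember (cPrec f g) as c eqn:Ec. revert Ec.
    induction H1 as [| | | | |? ? ? ? Hf1|? ? ? ? z1 ? Hrec1 IHrec Hg1 _|];
      intros Ec y' H2; try discriminate; injection Ec as <- <-.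
    + inversion H2 as [| | | | |? ? ? ? Hf2| |]; subst. eauto.
    + inversion H2 as [| | | | | |? ? ? ? z2 ? Hrec2 Hg2|]; subst.
      assert (z1 = z2) as <- by (apply IHrec; auto). eauto.
  - intros f IHf a y y' H1 H2.
    inversion H1 as [| | | | | | |? ? ? H0 Hlt]; inversion H2 as [| | | | | | |? ? ? H0' Hlt']; subst.
    destruct (Nat.lt_total y y') as [Hl|[Hl|Hl]]; auto; exfalso.
    + destruct (Hlt' y Hl) as [k Hk]. discriminate (IHf _ _ _ H0 Hk).
    + destruct (Hlt y' Hl) as [k Hk]. discriminate (IHf _ _ _ H0' Hk).
  - intros g IHg gs IHgs a ys ys' H1 H2; inversion H1; inversion H2; subst. f_equal; eauto.
Qed.

Lemma ev_det o c a y y' : ev o c a y -> ev o c a y' -> y = y'.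
Proof. apply ev_det_all. Qed.

Lemma Phi_det o e n m m' : Phi o e n m -> Phi o e n m' -> m = m'.
Proof.
  intros [c [<- H]] [c' [Hc H']]. apply enc_inj in Hc. subst. eapply ev_det; eauto.
Qed.

(** * Turing reducibility gives an embedding *)

Lemma ev_unary o f c a x y :
  ev o c a x -> ev o f [x] y -> ev o (cComp f (ccons c cnil)) a y.
Proof. intros Hc Hf. eapply evComp; [constructor; [exact Hc | constructor] | exact Hf]. Qed.

Fixpoint subst_oracle (t : code) (c : code) : code :=
  match c with
  | cOrac => t
  | cComp f gs => cComp (subst_oracle t f) (substs_oracle t gs)
  | cPrec f g => cPrec (subst_oracle t f) (subst_oracle t g)
  | cMin f => cMin (subst_oracle t f)
  | c => c
  end
with substs_oracle (t : code) (gs : codes) : codes :=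
  match gs with
  | cnil => cnil
  | ccons g gs => ccons (subst_oracle t g) (substs_oracle t gs)
  end.

Lemma ev_subst_oracle o o' t :
  (forall a y, o (hd 0 a) = Some y -> ev o' t a y) ->
  forall c a y, ev o c a y -> ev o' (subst_oracle t c) a y.
Proof.
  intros Ht.
  enough (H : (forall c a y, ev o c a y -> ev o' (subst_oracle t c) a y) /\
              (forall gs a ys, evs o gs a ys -> evs o' (substs_oracle t gs) a ys)) by apply H.
  apply code_codes_ind; simpl.
  1-4, 8: intros * H; inversion H; subst; auto; constructor.
  - intros f IHf gs IHgs a y H. inversion H; subst. econstructor; eauto.
  - intros f IHf g IHg a y H. remember (cPrec f g) as c eqn:Ec. revert Ec.
    induction H; intros Ec; try discriminate; injection Ec as <- <-; econstructor; eauto.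
  - intros f IHf a y H. inversion H as [| | | | | | |? ? ? Hz Hpos]; subst. constructor; auto.
    intros m Hm. destruct (Hpos m Hm) as [k Hk]. eauto.
  - intros g IHg gs IHgs a ys H. inversion H; subst. constructor; eauto.
Qed.

Lemma comp_tot_code X g : comp_tot X g -> exists c, forall n, ev (tot (chi X)) c [n] (g n).
Proof.
  intros [e He]. destruct (He 0) as [c [<- _]]. exists c. intros n. apply Phi_enc, He.
Qed.

Lemma comp_tot_comp_part X Y g : turing_le X Y -> comp_tot X g -> comp_part Y (tot g).
Proof.
  intros HXY Hg. apply comp_tot_code in Hg as [c Hc]. apply comp_tot_code in HXY as [cX HcX].
  set (t := cComp cX (ccons (cProj 0) cnil)).
  assert (Ht : forall a y, tot (chi X) (hd 0 a) = Some y -> ev (tot (chi Y)) t a y).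
  { intros a y [= <-]. apply (ev_unary _ _ _ _ (hd 0 a)); [destruct a; constructor | apply HcX]. }
  assert (Hgt : forall n, ev (tot (chi Y)) (subst_oracle t c) [n] (g n))
    by (intros n; apply (ev_subst_oracle _ _ _ Ht), Hc).
  exists (enc (subst_oracle t c)). intros n m. rewrite Phi_enc. split.
  - intros [= <-]. apply Hgt.
  - intros H. unfold tot. f_equal. eapply ev_det; [apply Hgt | exact H].
Qed.

Definition tot_embedding X Y (HXY : turing_le X Y) (a : K2X X) : BY Y :=
  exist _ (tot (proj1_sig a)) (comp_tot_comp_part X Y _ HXY (proj2_sig a)).

Lemma tot_embedding_spec X Y (HXY : turing_le X Y) :
  embedding_K2X_BY X Y (tot_embedding X Y HXY).
Proof.
  split.
  - intros [a Ha] [b Hb] E. apply (f_equal (@proj1_sig _ _)) in E. simpl in E.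
    assert (a = b) as <-.
    { apply functional_extensionality. intros n. apply (f_equal (fun f => f n)) in E.
      injection E. auto. }
    f_equal. apply proof_irrelevance.
  - intros [a Ha] [b Hb] [c Hc] Happ n m. simpl in *. split.
    + intros [= <-]. exists (a 0). split; [reflexivity | apply Happ].
    + intros [e [[= <-] HP]]. unfold tot. f_equal. eapply Phi_det; [apply Happ | exact HP].
Qed.

(** * Expressions and their compilation to codes *)

Inductive exp : Type :=
| Var : nat -> exp
| Cst : nat -> exp
| Suc : exp -> exp
| Orc : exp -> exp
| Rec : exp -> exp -> exp -> exp
| Sub : exp -> exps -> exp
with exps : Type :=
| enil : exps
| econs : exp -> exps -> exps.

Scheme exp_mut := Induction for exp Sort Prop
with exps_mut := Induction for exps Sort Prop.
Combined Scheme exp_exps_ind from exp_mut, exps_mut.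

Fixpoint sem (g : nat -> nat) (env : list nat) (e : exp) {struct e} : nat :=
  match e with
  | Var i => nth i env 0
  | Cst n => n
  | Suc e => S (sem g env e)
  | Orc e => g (sem g env e)
  | Rec e b s => prim_rec (fun n acc => sem g (n :: acc :: env) s) (sem g env b) (sem g env e)
  | Sub e es => sem g (sems g env es) e
  end
with sems (g : nat -> nat) (env : list nat) (es : exps) {struct es} : list nat :=
  match es with
  | enil => []
  | econs e es => sem g env e :: sems g env es
  end.

Lemma sem_Sub g env e es : sem g env (Sub e es) = sem g (sems g env es) e.
Proof. reflexivity. Qed.

Fixpoint elen (es : exps) : nat := match es with enil => 0 | econs _ es => S (elen es) end.

Fixpoint numeral (n : nat) : code :=
  match n with 0 => cZero | S n => cComp cSucc (ccons (numeral n) cnil) end.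

Fixpoint projections (i k : nat) : codes :=
  match k with 0 => cnil | S k => ccons (cProj i) (projections (S i) k) end.

(* [compile m e] expects an environment of length [m]; primitive recursion
   needs it to pass the environment on as extra arguments. *)
Fixpoint compile (m : nat) (e : exp) {struct e} : code :=
  match e with
  | Var i => cProj i
  | Cst n => numeral n
  | Suc e => cComp cSucc (ccons (compile m e) cnil)
  | Orc e => cComp cOrac (ccons (compile m e) cnil)
  | Rec e b s =>
      cComp (cPrec (compile m b) (compile (S (S m)) s)) (ccons (compile m e) (projections 0 m))
  | Sub e es => cComp (compile (elen es) e) (compiles m es)
  end
with compiles (m : nat) (es : exps) {struct es} : codes :=
  match es with
  | enil => cnil
  | econs e es => ccons (compile m e) (compiles m es)
  end.

Lemma ev_numeral o n a : ev o (numeral n) a n.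
Proof.
  induction n; simpl; [constructor|].
  apply (ev_unary _ _ _ _ n); [exact IHn | apply (evSucc o [n])].
Qed.

Lemma ev_projections o pre env :
  evs o (projections (length pre) (length env)) (pre ++ env) env.
Proof.
  revert pre. induction env as [|x env IH]; intros pre; simpl; constructor.
  - rewrite <- (nth_middle pre env x 0) at 2. constructor.
  - replace (pre ++ x :: env) with ((pre ++ [x]) ++ env) by (rewrite <- app_assoc; reflexivity).
    replace (S (length pre)) with (length (pre ++ [x])) by (rewrite length_app; simpl; lia).
    apply IH.
Qed.

Lemma sems_length g env es : length (sems g env es) = elen es.
Proof. induction es; simpl; auto. Qed.

Lemma compile_correct_all g :
  (forall e env, ev (tot g) (compile (length env) e) env (sem g env e)) /\
  (forall es env, evs (tot g) (compiles (length env) es) env (sems g env es)).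
Proof.
  apply exp_exps_ind; simpl.
  - intros i env. constructor.
  - intros n env. apply ev_numeral.
  - intros e IH env. eapply ev_unary; [apply IH | apply (evSucc _ [_])].
  - intros e IH env. eapply ev_unary; [apply IH | apply (evOrac _ [_]); reflexivity].
  - intros e IHe b IHb s IHs env.
    eapply evComp; [constructor; [apply IHe | apply (ev_projections _ [])] |].
    induction (sem g env e) as [|n IHn]; simpl.
    + constructor. apply IHb.
    + econstructor; [exact IHn | apply (IHs (n :: _ :: env))].
  - intros e IHe es IHes env. eapply evComp; [apply IHes|].
    rewrite <- (sems_length g env es). apply IHe.
  - intros env. constructor.
  - intros e IHe es IHes env. constructor; auto.
Qed.

Lemma compile_correct g e env : ev (tot g) (compile (length env) e) env (sem g env e).
Proof. apply compile_correct_all. Qed.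

Notation "⟨ x , .. , y ⟩" := (econs x .. (econs y enil) ..).

Definition truthy (n : nat) : Prop := n <> 0.

Lemma truthy_bool (b : bool) : truthy (if b then 1 else 0) <-> b = true.
Proof. destruct b; unfold truthy; intuition discriminate. Qed.

Definition PRED e := Sub (Rec (Var 0) (Cst 0) (Var 0)) ⟨e⟩.
Definition ADD a b := Sub (Rec (Var 0) (Var 1) (Suc (Var 1))) ⟨a, b⟩.
Definition SUBT a b := Sub (Rec (Var 1) (Var 0) (PRED (Var 1))) ⟨a, b⟩.
Definition IFZ c a b := Sub (Rec (Var 0) (Var 1) (Var 4)) ⟨c, a, b⟩.
Definition NOT a := IFZ a (Cst 1) (Cst 0).
Definition AND a b := IFZ a (Cst 0) (IFZ b (Cst 0) (Cst 1)).
Definition OR a b := IFZ a (IFZ b (Cst 0) (Cst 1)) (Cst 1).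
Definition EQB a b := NOT (ADD (SUBT a b) (SUBT b a)).
Definition LEB a b := NOT (SUBT a b).
Definition EVEN e := Sub (Rec (Var 0) (Cst 1) (SUBT (Cst 1) (Var 1))) ⟨e⟩.
Definition DIV2 e := Sub (Rec (Var 0) (Cst 0) (ADD (Var 1) (NOT (EVEN (Var 0))))) ⟨e⟩.
Definition TRI e := Sub (Rec (Var 0) (Cst 0) (ADD (Var 1) (Suc (Var 0)))) ⟨e⟩.
Definition PAIR a b := ADD (TRI (ADD a b)) b.
Definition DIAG e := Sub (Rec (Var 0) (Cst 0) (ADD (Var 1) (LEB (TRI (Suc (Var 0))) (Var 2)))) ⟨e⟩.
Definition UNPAIR2 e := Sub (SUBT (Var 0) (TRI (DIAG (Var 0)))) ⟨e⟩.
Definition UNPAIR1 e := Sub (SUBT (DIAG (Var 0)) (UNPAIR2 (Var 0))) ⟨e⟩.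

Arguments PRED : simpl never. Arguments ADD : simpl never. Arguments SUBT : simpl never.
Arguments IFZ : simpl never. Arguments NOT : simpl never. Arguments AND : simpl never.
Arguments OR : simpl never. Arguments EQB : simpl never. Arguments LEB : simpl never.
Arguments EVEN : simpl never. Arguments DIV2 : simpl never. Arguments TRI : simpl never.
Arguments PAIR : simpl never. Arguments DIAG : simpl never.
Arguments UNPAIR1 : simpl never. Arguments UNPAIR2 : simpl never.

Lemma div2_S n : Nat.div2 (S n) = Nat.div2 n + (if Nat.even n then 0 else 1).
Proof.
  pose proof (Nat.div2_odd n) as H. pose proof (Nat.div2_odd (S n)) as H'.
  rewrite Nat.odd_succ in H'. rewrite <- Nat.negb_even in H.
  destruct (Nat.even n); simpl in *; lia.
Qed.

Section Arithmetic.
Variable g : nat -> nat.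

Lemma sem_PRED env e : sem g env (PRED e) = pred (sem g env e).
Proof. unfold PRED; cbn. destruct (sem g env e); reflexivity. Qed.

Lemma sem_ADD env a b : sem g env (ADD a b) = sem g env a + sem g env b.
Proof. unfold ADD; cbn. induction (sem g env a); simpl; lia. Qed.

Lemma sem_SUBT env a b : sem g env (SUBT a b) = sem g env a - sem g env b.
Proof.
  unfold SUBT; cbn. setoid_rewrite sem_PRED. cbn.
  induction (sem g env b) as [|n IH]; rewrite ?prim_rec_S, ?IH; simpl; lia.
Qed.

Lemma sem_IFZ env c a b :
  sem g env (IFZ c a b) = if sem g env c =? 0 then sem g env a else sem g env b.
Proof. unfold IFZ; cbn. destruct (sem g env c); reflexivity. Qed.

Lemma sem_NOT env a : sem g env (NOT a) = if sem g env a =? 0 then 1 else 0.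
Proof. unfold NOT. rewrite sem_IFZ. destruct (sem g env a); reflexivity. Qed.

Lemma sem_AND env a b :
  sem g env (AND a b) = if (sem g env a =? 0) || (sem g env b =? 0) then 0 else 1.
Proof. unfold AND. rewrite !sem_IFZ. destruct (sem g env a), (sem g env b); reflexivity. Qed.

Lemma sem_OR env a b :
  sem g env (OR a b) = if (sem g env a =? 0) && (sem g env b =? 0) then 0 else 1.
Proof. unfold OR. rewrite !sem_IFZ. destruct (sem g env a), (sem g env b); reflexivity. Qed.

Lemma sem_EQB env a b : sem g env (EQB a b) = if sem g env a =? sem g env b then 1 else 0.
Proof.
  unfold EQB. rewrite sem_NOT, sem_ADD, !sem_SUBT.
  destruct (Nat.eqb_spec (sem g env a) (sem g env b)),
    (Nat.eqb_spec (sem g env a - sem g env b + (sem g env b - sem g env a)) 0); lia.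
Qed.

Lemma sem_LEB env a b : sem g env (LEB a b) = if sem g env a <=? sem g env b then 1 else 0.
Proof.
  unfold LEB. rewrite sem_NOT, sem_SUBT.
  destruct (Nat.leb_spec (sem g env a) (sem g env b)),
    (Nat.eqb_spec (sem g env a - sem g env b) 0); lia.
Qed.

Lemma truthy_NOT env a : truthy (sem g env (NOT a)) <-> sem g env a = 0.
Proof. rewrite sem_NOT, truthy_bool. apply Nat.eqb_eq. Qed.

Lemma truthy_AND env a b :
  truthy (sem g env (AND a b)) <-> truthy (sem g env a) /\ truthy (sem g env b).
Proof. rewrite sem_AND. unfold truthy. destruct (sem g env a), (sem g env b); simpl; lia. Qed.

Lemma truthy_OR env a b :
  truthy (sem g env (OR a b)) <-> truthy (sem g env a) \/ truthy (sem g env b).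
Proof. rewrite sem_OR. unfold truthy. destruct (sem g env a), (sem g env b); simpl; lia. Qed.

Lemma truthy_EQB env a b : truthy (sem g env (EQB a b)) <-> sem g env a = sem g env b.
Proof. rewrite sem_EQB, truthy_bool. apply Nat.eqb_eq. Qed.

Lemma sem_EVEN env e : sem g env (EVEN e) = if Nat.even (sem g env e) then 1 else 0.
Proof.
  unfold EVEN; cbn. setoid_rewrite sem_SUBT. cbn.
  induction (sem g env e) as [|n IH]; [reflexivity|].
  rewrite prim_rec_S, IH, Nat.even_succ, <- Nat.negb_even. destruct (Nat.even n); reflexivity.
Qed.

Lemma sem_DIV2 env e : sem g env (DIV2 e) = Nat.div2 (sem g env e).
Proof.
  unfold DIV2; cbn. setoid_rewrite sem_ADD. setoid_rewrite sem_NOT. setoid_rewrite sem_EVEN. cbn.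
  induction (sem g env e) as [|n IH]; [reflexivity|].
  rewrite prim_rec_S, IH, div2_S. destruct (Nat.even n); reflexivity.
Qed.

Lemma sem_TRI env e : sem g env (TRI e) = tri (sem g env e).
Proof.
  unfold TRI; cbn. setoid_rewrite sem_ADD. cbn.
  induction (sem g env e) as [|n IH]; [reflexivity|]. rewrite prim_rec_S, IH. simpl. lia.
Qed.

Lemma sem_PAIR env a b : sem g env (PAIR a b) = npair (sem g env a) (sem g env b).
Proof. unfold PAIR, npair. rewrite sem_ADD, sem_TRI, sem_ADD. reflexivity. Qed.

Lemma sem_DIAG env e : sem g env (DIAG e) = diag (sem g env e).
Proof.
  unfold DIAG; cbn. setoid_rewrite sem_ADD. setoid_rewrite sem_LEB. setoid_rewrite sem_TRI.
  reflexivity.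
Qed.

Lemma sem_UNPAIR2 env e : sem g env (UNPAIR2 e) = unpair2 (sem g env e).
Proof. unfold UNPAIR2. cbn [sem sems]. rewrite sem_SUBT, sem_TRI, sem_DIAG. reflexivity. Qed.

Lemma sem_UNPAIR1 env e : sem g env (UNPAIR1 e) = unpair1 (sem g env e).
Proof. unfold UNPAIR1. cbn [sem sems]. rewrite sem_SUBT, sem_UNPAIR2, sem_DIAG. reflexivity. Qed.

End Arithmetic.

Fixpoint lcode (l : list nat) : nat :=
  match l with [] => 0 | x :: l => S (npair x (lcode l)) end.

Definition lhd (c : nat) : nat := unpair1 (pred c).
Definition ltl (c : nat) : nat := unpair2 (pred c).

Lemma unpair_0 : unpair1 0 = 0 /\ unpair2 0 = 0.
Proof. change 0 with (npair 0 0) at 1 3. rewrite unpair1_npair, unpair2_npair. auto. Qed.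

Lemma lhd_lcode l : lhd (lcode l) = hd 0 l.
Proof. destruct l; unfold lhd; simpl; [apply unpair_0 | apply unpair1_npair]. Qed.

Lemma ltl_lcode l : ltl (lcode l) = lcode (tl l).
Proof. destruct l; unfold ltl; simpl; [apply unpair_0 | apply unpair2_npair]. Qed.

Lemma lcode_inj l l' : lcode l = lcode l' -> l = l'.
Proof.
  revert l'; induction l as [|x l IH]; intros [|x' l'] H; simpl in *; try discriminate; auto.
  injection H as H. apply npair_inj in H as [-> H]. f_equal. auto.
Qed.

Lemma lcode_surj c : exists l, lcode l = c.
Proof.
  induction c as [[|c] IH] using (well_founded_induction lt_wf); [exists []; reflexivity|].
  destruct (IH (unpair2 c)) as [l Hl]; [pose proof (unpair2_le c); lia|].
  exists (unpair1 c :: l). simpl. rewrite Hl, npair_unpair. reflexivity.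
Qed.

Lemma length_le_lcode l : length l <= lcode l.
Proof. induction l as [|x l IH]; simpl; [lia|]. pose proof (le_npair_r x (lcode l)). lia. Qed.

Lemma iter_ltl_lcode n l : Nat.iter n ltl (lcode l) = lcode (skipn n l).
Proof.
  revert l. induction n as [|n IH]; intros l; [reflexivity|].
  rewrite Nat.iter_succ_r, ltl_lcode, IH. destruct l; simpl; [rewrite skipn_nil|]; reflexivity.
Qed.

Definition LCONS x l := Suc (PAIR x l).
Definition LHD c := UNPAIR1 (PRED c).
Definition LTL c := UNPAIR2 (PRED c).
Definition DROP i c := Sub (Rec (Var 0) (Var 1) (LTL (Var 1))) ⟨i, c⟩.
Definition NTH i c := LHD (DROP i c).
Definition LEN c :=
  Sub (Rec (Var 0) (Cst 0) (ADD (Var 1) (NOT (EQB (DROP (Var 0) (Var 2)) (Cst 0))))) ⟨c⟩.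
Arguments LCONS : simpl never. Arguments LHD : simpl never. Arguments LTL : simpl never.
Arguments DROP : simpl never. Arguments NTH : simpl never. Arguments LEN : simpl never.

Section Lists.
Variable g : nat -> nat.

Lemma sem_LCONS env x c l :
  sem g env c = lcode l -> sem g env (LCONS x c) = lcode (sem g env x :: l).
Proof. intros Hc. unfold LCONS. cbn [sem]. rewrite sem_PAIR, Hc. reflexivity. Qed.

Lemma sem_LHD env c l : sem g env c = lcode l -> sem g env (LHD c) = hd 0 l.
Proof. intros Hc. unfold LHD. rewrite sem_UNPAIR1, sem_PRED, Hc. apply lhd_lcode. Qed.

Lemma sem_LTL env c l : sem g env c = lcode l -> sem g env (LTL c) = lcode (tl l).
Proof. intros Hc. unfold LTL. rewrite sem_UNPAIR2, sem_PRED, Hc. apply ltl_lcode. Qed.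

Lemma sem_DROP env i c l :
  sem g env c = lcode l -> sem g env (DROP i c) = lcode (skipn (sem g env i) l).
Proof.
  intros Hc. rewrite <- iter_ltl_lcode, <- Hc. unfold DROP; cbn.
  induction (sem g env i) as [|n IH]; [reflexivity|].
  rewrite prim_rec_S, Nat.iter_succ, <- IH. unfold LTL. rewrite sem_UNPAIR2, sem_PRED. reflexivity.
Qed.

Lemma sem_NTH env i c l : sem g env c = lcode l -> sem g env (NTH i c) = nth (sem g env i) l 0.
Proof.
  intros Hc. unfold NTH. erewrite sem_LHD by (apply sem_DROP; exact Hc).
  clear Hc. generalize (sem g env i). induction l as [|x l IH]; intros [|n]; simpl; auto.
Qed.

Lemma sem_LEN env c l : sem g env c = lcode l -> sem g env (LEN c) = length l.
Proof.
  intros Hc. unfold LEN; cbn [sem sems nth].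
  setoid_rewrite sem_ADD. setoid_rewrite sem_NOT. setoid_rewrite sem_EQB.
  setoid_rewrite (sem_DROP _ _ _ l); [|exact Hc]. cbn [sem nth]. rewrite Hc.
  assert (Hcount : forall n, prim_rec (fun n acc => acc +
      (if (if lcode (skipn n l) =? 0 then 1 else 0) =? 0 then 1 else 0)) 0 n = Nat.min n (length l)).
  { induction n as [|n IH]; [reflexivity|]. rewrite prim_rec_S, IH.
    destruct (skipn n l) eqn:E; cbn [lcode Nat.eqb].
    - apply skipn_all_iff in E. lia.
    - assert (n < length l) by (pose proof (f_equal (@length nat) E);
        rewrite length_skipn in *; simpl in *; lia). lia. }
  rewrite Hcount. pose proof (length_le_lcode l). lia.
Qed.

End Lists.

Fixpoint vars_from (i k : nat) : exps :=
  match k with 0 => enil | S k => econs (Var i) (vars_from (S i) k) end.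

Lemma sems_vars_from g pre env : sems g (pre ++ env) (vars_from (length pre) (length env)) = env.
Proof.
  revert pre. induction env as [|x env IH]; intros pre; simpl; [reflexivity|].
  rewrite nth_middle. f_equal.
  replace (pre ++ x :: env) with ((pre ++ [x]) ++ env) by (rewrite <- app_assoc; reflexivity).
  replace (S (length pre)) with (length (pre ++ [x])) by (rewrite length_app; simpl; lia).
  apply IH.
Qed.

Lemma sems_vars_0 g env : sems g env (vars_from 0 (length env)) = env.
Proof. exact (sems_vars_from g [] env). Qed.

Lemma sems_vars_1 g a env : sems g (a :: env) (vars_from 1 (length env)) = env.
Proof. exact (sems_vars_from g [a] env). Qed.

Lemma sems_vars_3 g a b c env : sems g (a :: b :: c :: env) (vars_from 3 (length env)) = env.
Proof. exact (sems_vars_from g [a; b; c] env). Qed.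

(* In [EXB m n body] and [FORB m n body] the bound variable is [Var 0] of
   [body]; the enclosing environment must have length [m]. *)
Definition EXB m n body :=
  Sub (Rec (Var 0) (Cst 0) (OR (Var 1) (Sub body (econs (Var 0) (vars_from 3 m)))))
      (econs n (vars_from 0 m)).
Definition FORB m n body :=
  Sub (Rec (Var 0) (Cst 1) (AND (Var 1) (Sub body (econs (Var 0) (vars_from 3 m)))))
      (econs n (vars_from 0 m)).
Arguments EXB : simpl never. Arguments FORB : simpl never.

Lemma truthy_prim_rec_or (P : nat -> nat) N :
  truthy (prim_rec (fun i acc => if (acc =? 0) && (P i =? 0) then 0 else 1) 0 N) <->
  exists i, i < N /\ truthy (P i).
Proof.
  set (F := fun i acc => if (acc =? 0) && (P i =? 0) then 0 else 1).
  induction N as [|N IH].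
  - unfold truthy. simpl. split; [lia | intros [i [Hi _]]; lia].
  - rewrite prim_rec_S. unfold F at 1. unfold truthy in *.
    destruct (Nat.eqb_spec (prim_rec F 0 N) 0) as [E|E];
      destruct (Nat.eqb_spec (P N) 0) as [E'|E']; simpl.
    + split; [lia|]. intros [i [Hi HP]]. destruct (Nat.eq_dec i N) as [->|Hne]; [lia|].
      exfalso. apply (proj2 IH); [exists i; split; [lia | exact HP] | exact E].
    + split; [intros _; exists N; auto | lia].
    + split; [intros _ | lia]. destruct (proj1 IH E) as [i [Hi HP]]. exists i. auto.
    + split; [intros _ | lia]. destruct (proj1 IH E) as [i [Hi HP]]. exists i. auto.
Qed.

Lemma truthy_prim_rec_and (P : nat -> nat) N :
  truthy (prim_rec (fun i acc => if (acc =? 0) || (P i =? 0) then 0 else 1) 1 N) <->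
  forall i, i < N -> truthy (P i).
Proof.
  set (F := fun i acc => if (acc =? 0) || (P i =? 0) then 0 else 1).
  induction N as [|N IH].
  - unfold truthy. simpl. split; [intros _ i Hi; lia | lia].
  - rewrite prim_rec_S. unfold F at 1. unfold truthy in *.
    destruct (Nat.eqb_spec (prim_rec F 1 N) 0) as [E|E];
      destruct (Nat.eqb_spec (P N) 0) as [E'|E']; simpl.
    1, 2: split; [lia|]; intros H; exfalso; apply (proj2 IH); [intros i Hi; apply H; lia | exact E].
    + split; [lia|]. intros H. exfalso. apply (H N); auto.
    + split; [intros _ i Hi | lia]. destruct (Nat.eq_dec i N) as [->|Hne]; [exact E'|].
      apply (proj1 IH E). lia.
Qed.

Definition EXL m p body :=
  EXB m (LEN (Var p)) (Sub body (econs (NTH (Var 0) (Var (S p))) (vars_from 1 m))).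
Definition FORL m p body :=
  FORB m (LEN (Var p)) (Sub body (econs (NTH (Var 0) (Var (S p))) (vars_from 1 m))).
Definition MEM x c := Sub (EXL 2 1 (EQB (Var 0) (Var 1))) ⟨x, c⟩.
Arguments EXL : simpl never. Arguments FORL : simpl never. Arguments MEM : simpl never.

Fixpoint ANDL (l : list exp) : exp :=
  match l with [] => Cst 1 | e :: l => AND e (ANDL l) end.

Section Quantifiers.
Variable g : nat -> nat.

Lemma truthy_EXB env m n body : length env = m ->
  truthy (sem g env (EXB m n body)) <->
  exists i, i < sem g env n /\ truthy (sem g (i :: env) body).
Proof.
  intros <-. unfold EXB. cbn [sem sems]. rewrite sems_vars_0.
  setoid_rewrite sem_OR. cbn [sem sems nth].
  setoid_rewrite sems_vars_3.
  apply truthy_prim_rec_or.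
Qed.

Lemma truthy_FORB env m n body : length env = m ->
  truthy (sem g env (FORB m n body)) <->
  forall i, i < sem g env n -> truthy (sem g (i :: env) body).
Proof.
  intros <-. unfold FORB. cbn [sem sems]. rewrite sems_vars_0.
  setoid_rewrite sem_AND. cbn [sem sems nth].
  setoid_rewrite sems_vars_3.
  apply truthy_prim_rec_and.
Qed.

Lemma sem_list_elem env p body l i : nth p env 0 = lcode l ->
  sem g (i :: env) (Sub body (econs (NTH (Var 0) (Var (S p))) (vars_from 1 (length env)))) =
  sem g (nth i l 0 :: env) body.
Proof.
  intros Hp. cbn [sem sems]. rewrite sems_vars_1.
  rewrite (sem_NTH _ _ _ _ l) by exact Hp. reflexivity.
Qed.

Lemma truthy_EXL env m p body l : length env = m -> nth p env 0 = lcode l ->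
  truthy (sem g env (EXL m p body)) <->
  exists x, In x l /\ truthy (sem g (x :: env) body).
Proof.
  intros <- Hp. unfold EXL. rewrite truthy_EXB, (sem_LEN _ _ _ l) by auto.
  setoid_rewrite (sem_list_elem _ _ _ _ _ Hp). split.
  - intros [i [Hi H]]. exists (nth i l 0). split; [apply nth_In|]; auto.
  - intros [x [Hx H]]. apply (In_nth _ _ 0) in Hx as [i [Hi <-]]. eauto.
Qed.

Lemma truthy_FORL env m p body l : length env = m -> nth p env 0 = lcode l ->
  truthy (sem g env (FORL m p body)) <->
  forall x, In x l -> truthy (sem g (x :: env) body).
Proof.
  intros <- Hp. unfold FORL. rewrite truthy_FORB, (sem_LEN _ _ _ l) by auto.
  setoid_rewrite (sem_list_elem _ _ _ _ _ Hp). split.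
  - intros H x Hx. apply (In_nth _ _ 0) in Hx as [i [Hi <-]]. auto.
  - intros H i Hi. apply H, nth_In, Hi.
Qed.

Lemma truthy_MEM env x c l : sem g env c = lcode l ->
  truthy (sem g env (MEM x c)) <-> In (sem g env x) l.
Proof.
  intros Hc. unfold MEM. cbn [sem sems].
  rewrite (truthy_EXL _ 2 1 _ l) by auto.
  setoid_rewrite truthy_EQB. cbn [sem nth].
  split; [intros [y [Hy ->]]; exact Hy | eauto].
Qed.

Lemma truthy_ANDL env l : truthy (sem g env (ANDL l)) <-> Forall (fun e => truthy (sem g env e)) l.
Proof.
  induction l as [|e l IH]; cbn [ANDL].
  - split; [constructor | intros _; discriminate].
  - rewrite truthy_AND, IH, Forall_cons_iff. reflexivity.
Qed.

End Quantifiers.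

(** * Derivations of sequential computations *)

Fixpoint code_list (gs : codes) : list code :=
  match gs with cnil => [] | ccons g gs => g :: code_list gs end.

Lemma encs_lcode gs : encs gs = lcode (map enc (code_list gs)).
Proof. induction gs; simpl; rewrite ?cpair_npair; congruence. Qed.

(* [Judg j k e a y]: the code numbered [e] outputs [y] on arguments [a] in
   context [(j, k)], whose oracle is [Y] if [j = 0] and [join (fy j) (fN k)]
   otherwise (see [context]). *)
Inductive judgment : Type := Judg (j k e : nat) (a : list nat) (y : nat).

(* Answering an oracle query leads to a context of smaller rank. *)
Definition rank (j k : nat) : nat := if j =? 0 then 0 else S k.

Section Derivations.
Variables (Y : nat -> bool) (cbase cstep : code) (cfuns : list code).

(* The judgment that answers the oracle query [x] in context [(j, k)], [j <> 0]:
   even queries go to the [j]-th function, odd ones to the [k]-th numeral,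
   which is computed from [Y] for [k = 0] and by the step code otherwise. *)
Definition query (j k x y : nat) : judgment :=
  if Nat.even x then Judg 0 0 (enc (nth j cfuns cZero)) [Nat.div2 x] y
  else match k with
       | 0 => Judg 0 0 (enc cbase) [Nat.div2 x] y
       | S k' => Judg 1 k' (enc cstep) [Nat.div2 x] y
       end.

(* Stated on code numbers, laid out as by [enc], so that an expression can
   check it. *)
Definition justified (L : list judgment) (J : judgment) : Prop :=
  let '(Judg j k e a y) := J in
  let b := unpair2 e in
  match unpair1 e with
  | 0 => y = 0
  | 1 => y = S (hd 0 a)
  | 2 => y = nth b a 0
  | 3 => if j =? 0 then y = chi Y (hd 0 a) else In (query j k (hd 0 a) y) L
  | 4 => exists es bs, lcode es = unpair2 b /\ length bs = length es /\
           In (Judg j k (unpair1 b) bs y) L /\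
           forall i, i < length es -> In (Judg j k (nth i es 0) a (nth i bs 0)) L
  | 5 => match a with
         | [] => False
         | 0 :: a' => In (Judg j k (unpair1 b) a' y) L
         | S n :: a' => exists z, In (Judg j k e (n :: a') z) L /\
                                  In (Judg j k (unpair2 b) (n :: z :: a') y) L
         end
  | 6 => In (Judg j k b (y :: a) 0) L /\
         forall m, m < y -> exists z, In (Judg j k b (m :: a) (S z)) L
  | _ => False
  end.

Definition derivation (L : list judgment) : Prop := forall J, In J L -> justified L J.

Definition justified_code (L : list judgment) (j k : nat) (a : list nat) (y : nat) (c : code) :=
  match c with
  | cZero => y = 0
  | cSucc => y = S (hd 0 a)
  | cProj i => y = nth i a 0
  | cOrac => if j =? 0 then y = chi Y (hd 0 a) else In (query j k (hd 0 a) y) L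
  | cComp f gs =>
      exists bs, length bs = length (code_list gs) /\ In (Judg j k (enc f) bs y) L /\
        forall i, i < length (code_list gs) ->
          In (Judg j k (enc (nth i (code_list gs) cZero)) a (nth i bs 0)) L
  | cPrec f g =>
      match a with
      | [] => False
      | 0 :: a' => In (Judg j k (enc f) a' y) L
      | S n :: a' => exists z, In (Judg j k (enc c) (n :: a') z) L /\
                               In (Judg j k (enc g) (n :: z :: a') y) L
      end
  | cMin f => In (Judg j k (enc f) (y :: a) 0) L /\
              forall m, m < y -> exists z, In (Judg j k (enc f) (m :: a) (S z)) L
  end.

Lemma nth_map_enc (cs : list code) i : nth i (map enc cs) 0 = enc (nth i cs cZero).
Proof. exact (map_nth enc cs cZero i). Qed.

Lemma justified_enc L j k c a y :
  justified L (Judg j k (enc c) a y) <-> justified_code L j k a y c.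
Proof.
  destruct c as [| | i | | f gs | f g | f]; cbn [enc justified justified_code];
    rewrite ?cpair_npair; repeat rewrite ?unpair1_npair, ?unpair2_npair; try reflexivity.
  rewrite encs_lcode. split.
  - intros [es [bs [Hes%lcode_inj [Hl [Hf Hgs]]]]]. subst es. rewrite length_map in Hl.
    exists bs. repeat split; auto. intros i Hi. rewrite <- nth_map_enc. apply Hgs.
    rewrite length_map. exact Hi.
  - intros [bs [Hl [Hf Hgs]]]. exists (map enc (code_list gs)), bs.
    rewrite length_map. repeat split; auto. intros i Hi. rewrite nth_map_enc. auto.
Qed.

Lemma justified_incl L L' J : incl L L' -> justified L J -> justified L' J.
Proof.
  intros Hi. destruct J as [j k e a y]; cbn [justified].
  destruct (unpair1 e) as [|[|[|[|[|[|[|t]]]]]]]; auto.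
  - destruct (j =? 0); auto.
  - intros [es [bs [H1 [H2 [H3 H4]]]]]. exists es, bs. repeat split; auto.
  - destruct a as [|[|n] a']; auto. intros [z [H1 H2]]. exists z. auto.
  - intros [H1 H2]. split; auto. intros m Hm. destruct (H2 m Hm) as [z Hz]. eauto.
Qed.

Lemma derivation_nil : derivation [].
Proof. intros J []. Qed.

Lemma derivation_app L1 L2 : derivation L1 -> derivation L2 -> derivation (L1 ++ L2).
Proof.
  intros H1 H2 J [HJ|HJ]%in_app_or; eapply justified_incl;
    [apply incl_appl, incl_refl | auto | apply incl_appr, incl_refl | auto].
Qed.

Definition derivable (j k : nat) (c : code) (a : list nat) (y : nat) : Prop :=
  exists L, derivation L /\ In (Judg j k (enc c) a y) L.

Lemma derivable_extend L1 L2 j k c a y : derivation L1 -> derivation L2 ->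
  justified_code (Judg j k (enc c) a y :: L1 ++ L2) j k a y c -> derivable j k c a y.
Proof.
  intros H1 H2 Hc. exists (Judg j k (enc c) a y :: L1 ++ L2). split; [|left; reflexivity].
  intros J [<-|HJ]; [apply justified_enc, Hc|].
  eapply justified_incl; [apply incl_tl, incl_refl | apply derivation_app; auto].
Qed.

Lemma derivation_below (P : nat -> nat -> judgment) n :
  (forall m, m < n -> exists z L, derivation L /\ In (P m z) L) ->
  exists L, derivation L /\ forall m, m < n -> exists z, In (P m z) L.
Proof.
  induction n as [|n IH]; intros H.
  - exists []. split; [apply derivation_nil | intros m Hm; lia].
  - destruct IH as [L1 [HL1 Hin1]]; [intros m Hm; apply H; lia|].
    destruct (H n) as [z [L2 [HL2 Hin2]]]; [lia|].
    exists (L1 ++ L2). split; [apply derivation_app; auto|].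
    intros m Hm. destruct (Nat.eq_dec m n) as [->|Hne].
    + exists z. apply in_or_app; auto.
    + destruct (Hin1 m ltac:(lia)) as [z' Hz']. exists z'. apply in_or_app; auto.
Qed.

Variables (fy fN : nat -> nat -> option nat).
Hypothesis Hbase : forall x y, fN 0 x = Some y <-> ev (tot (chi Y)) cbase [x] y.
Hypothesis Hstep : forall k x y, fN (S k) x = Some y <-> ev (join (fy 1) (fN k)) cstep [x] y.
Hypothesis Hfuns :
  forall j x y, j <> 0 -> fy j x = Some y <-> ev (tot (chi Y)) (nth j cfuns cZero) [x] y.

Definition context (j k : nat) : nat -> option nat :=
  if j =? 0 then tot (chi Y) else join (fy j) (fN k).

Lemma query_spec j k x : j <> 0 ->
  exists j' k' c', rank j' k' < rank j k /\
    (forall y, query j k x y = Judg j' k' (enc c') [Nat.div2 x] y) /\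
    (forall y, context j k x = Some y <-> ev (context j' k') c' [Nat.div2 x] y).
Proof.
  intros Hj. unfold query, context, rank, join. rewrite (proj2 (Nat.eqb_neq _ _) Hj).
  destruct (Nat.even x); [|destruct k as [|k]].
  - exists 0, 0, (nth j cfuns cZero). repeat split; [cbn; lia | apply Hfuns, Hj | apply Hfuns, Hj].
  - exists 0, 0, cbase. repeat split; [cbn; lia | apply Hbase | apply Hbase].
  - exists 1, k, cstep. repeat split; [cbn; lia | apply Hstep | apply Hstep].
Qed.

Lemma evs_of_nth o gs a bs :
  length bs = length (code_list gs) ->
  (forall i, i < length bs -> ev o (nth i (code_list gs) cZero) a (nth i bs 0)) ->
  evs o gs a bs.
Proof.
  revert bs. induction gs as [|g gs IH]; intros [|b bs] Hl H; simpl in *; try discriminate;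
    constructor.
  - apply (H 0). lia.
  - apply IH; [lia|]. intros i Hi. apply (H (S i)). lia.
Qed.

Lemma derivation_sound L : derivation L ->
  forall j k c a y, In (Judg j k (enc c) a y) L -> ev (context j k) c a y.
Proof.
  intros HL j k. remember (rank j k) as r eqn:Hr. revert j k Hr.
  induction r as [r IHr] using (well_founded_induction lt_wf). intros j k Hr.
  assert (Hjust : forall c a y, In (Judg j k (enc c) a y) L -> justified_code L j k a y c)
    by (intros c a y Hin; apply justified_enc, HL, Hin).
  enough (H : (forall c a y, In (Judg j k (enc c) a y) L -> ev (context j k) c a y) /\
              (forall gs g, In g (code_list gs) ->
                 forall a y, In (Judg j k (enc g) a y) L -> ev (context j k) g a y)) by apply H.
  apply code_codes_ind.
  1-3: intros * Hin; apply Hjust in Hin; cbn in Hin; subst; constructor.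
  - intros a y Hin%Hjust. cbn in Hin. constructor.
    destruct (Nat.eqb_spec j 0) as [->|Hj].
    + subst. reflexivity.
    + destruct (query_spec j k (hd 0 a) Hj) as [j' [k' [c' [Hrk [Hq Hctx]]]]].
      rewrite Hq in Hin. apply Hctx. eapply IHr; [subst r; exact Hrk | reflexivity | exact Hin].
  - intros f IHf gs IHgs a y Hin%Hjust. destruct Hin as [bs [Hl [Hf Hgs]]].
    apply evComp with (bs := bs); [|auto].
    apply evs_of_nth; [exact Hl|]. intros i Hi. rewrite Hl in Hi.
    apply IHgs; [apply nth_In; exact Hi | apply Hgs, Hi].
  - intros f IHf g IHg [|n a] y Hin; [apply Hjust in Hin; contradiction|].
    revert y Hin. induction n as [|n IHn]; intros y Hin%Hjust; cbn in Hin.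
    + constructor. auto.
    + destruct Hin as [z [Hz Hy]]. econstructor; eauto.
  - intros f IHf a y Hin%Hjust. destruct Hin as [Hy Hpos]. constructor; [auto|].
    intros m Hm. destruct (Hpos m Hm) as [z Hz]. eauto.
  - intros g [].
  - intros g IHg gs IHgs g' [<-|Hin]; auto.
Qed.

Lemma derivable_oracle j k a y :
  (forall j' k', rank j' k' < rank j k ->
     forall c a' y', ev (context j' k') c a' y' -> derivable j' k' c a' y') ->
  ev (context j k) cOrac a y -> derivable j k cOrac a y.
Proof.
  intros IH He. inversion He as [| | | ? ? Ho | | | |]; subst.
  destruct (Nat.eqb_spec j 0) as [->|Hj].
  - apply (derivable_extend [] []); [apply derivation_nil | apply derivation_nil |].
    cbn. unfold context, tot in Ho. simpl in Ho. congruence.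
  - destruct (query_spec j k (hd 0 a) Hj) as [j' [k' [c' [Hrk [Hq Hctx]]]]].
    apply Hctx in Ho. destruct (IH j' k' Hrk _ _ _ Ho) as [L [HL Hin]].
    apply (derivable_extend L []); [exact HL | apply derivation_nil |].
    cbn. rewrite (proj2 (Nat.eqb_neq _ _) Hj), Hq. right. rewrite app_nil_r. exact Hin.
Qed.

Lemma derivation_complete j k c a y : ev (context j k) c a y -> derivable j k c a y.
Proof.
  remember (rank j k) as r eqn:Hr. revert j k Hr c a y.
  induction r as [r IHr] using (well_founded_induction lt_wf). intros j k Hr.
  enough (H : (forall c a y, ev (context j k) c a y -> derivable j k c a y) /\
              (forall gs a bs, evs (context j k) gs a bs ->
                 exists L, derivation L /\ length bs = length (code_list gs) /\
                   forall i, i < length bs ->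
                     In (Judg j k (enc (nth i (code_list gs) cZero)) a (nth i bs 0)) L))
    by apply H.
  apply code_codes_ind.
  1-3: intros * He; inversion He; subst;
    apply (derivable_extend [] []); [apply derivation_nil | apply derivation_nil | reflexivity].
  - intros a y. apply derivable_oracle. intros j' k' Hlt. subst r. exact (IHr _ Hlt j' k' eq_refl).
  - intros f IHf gs IHgs a y He. inversion He as [| | | |? ? ? bs ? Hgs Hf| | |]; subst.
    destruct (IHgs _ _ Hgs) as [L1 [HL1 [Hl Hin1]]], (IHf _ _ Hf) as [L2 [HL2 Hin2]].
    apply (derivable_extend L1 L2); [exact HL1 | exact HL2|].
    exists bs. repeat split; [exact Hl | right; apply in_or_app; auto |].
    intros i Hi. right. apply in_or_app. left. apply Hin1. lia.
  - intros f IHf g IHg a y He. remember (cPrec f g) as c eqn:Ec. revert Ec.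
    induction He; intros Ec; try discriminate; injection Ec as <- <-.
    + destruct (IHf _ _ He) as [L [HL Hin]].
      apply (derivable_extend L []); [exact HL | apply derivation_nil |].
      cbn. right. rewrite app_nil_r. exact Hin.
    + destruct (IHHe1 eq_refl) as [L1 [HL1 Hin1]], (IHg _ _ He2) as [L2 [HL2 Hin2]].
      apply (derivable_extend L1 L2); [exact HL1 | exact HL2|].
      exists z. split; right; apply in_or_app; auto.
  - intros f IHf a y He. inversion He as [| | | | | | |? ? ? Hy Hpos]; subst.
    destruct (IHf _ _ Hy) as [L0 [HL0 Hin0]].
    destruct (derivation_below (fun m z => Judg j k (enc f) (m :: a) (S z)) y) as [L1 [HL1 Hin1]].
    { intros m Hm. destruct (Hpos m Hm) as [z Hz]. exists z. apply IHf, Hz. }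
    apply (derivable_extend L0 L1); [exact HL0 | exact HL1|].
    split; [right; apply in_or_app; auto|].
    intros m Hm. destruct (Hin1 m Hm) as [z Hz]. exists z. right. apply in_or_app. auto.
  - intros a bs He. inversion He; subst. exists []. split; [apply derivation_nil|].
    split; [reflexivity | intros i Hi; simpl in Hi; lia].
  - intros g IHg gs IHgs a bs He. inversion He as [|? ? ? ? ? Hg Hgs]; subst.
    destruct (IHg _ _ Hg) as [L1 [HL1 Hin1]], (IHgs _ _ Hgs) as [L2 [HL2 [Hl Hin2]]].
    exists (L1 ++ L2). split; [apply derivation_app; auto|].
    split; [simpl; lia|]. intros [|i] Hi; simpl; apply in_or_app; [left; exact Hin1|].
    right. apply Hin2. simpl in Hi. lia.
Qed.

Lemma ev_iff_derivable j k c a y : ev (context j k) c a y <-> derivable j k c a y.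
Proof.
  split; [apply derivation_complete | intros [L [HL Hin]]; exact (derivation_sound L HL _ _ _ _ _ Hin)].
Qed.

End Derivations.

(** * Checking derivations by an expression *)

Definition jenc (J : judgment) : nat :=
  let '(Judg j k e a y) := J in npair j (npair k (npair e (npair (lcode a) y))).

Definition Lcode (L : list judgment) : nat := lcode (map jenc L).

Lemma jenc_inj J J' : jenc J = jenc J' -> J = J'.
Proof.
  destruct J as [j k e a y], J' as [j' k' e' a' y']. cbn [jenc].
  intros [-> [-> [-> [Ha%lcode_inj ->]%npair_inj]%npair_inj]%npair_inj]%npair_inj. congruence.
Qed.

Lemma jenc_surj z : exists J, jenc J = z.
Proof.
  destruct (lcode_surj (unpair1 (unpair2 (unpair2 (unpair2 z))))) as [a Ha].
  exists (Judg (unpair1 z) (unpair1 (unpair2 z)) (unpair1 (unpair2 (unpair2 z))) a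
            (unpair2 (unpair2 (unpair2 (unpair2 z))))).
  cbn [jenc]. rewrite Ha, !npair_unpair. reflexivity.
Qed.

Lemma Lcode_surj z : exists L, Lcode L = z.
Proof.
  destruct (lcode_surj z) as [l <-]. unfold Lcode.
  induction l as [|x l [L HL]]; [exists []; reflexivity|].
  destruct (jenc_surj x) as [J <-]. exists (J :: L). simpl. congruence.
Qed.

Lemma in_map_jenc L J : In (jenc J) (map jenc L) <-> In J L.
Proof.
  split; [intros (J' & HJ%jenc_inj & Hin)%in_map_iff; congruence | apply in_map].
Qed.

Definition JMK j k e A y := PAIR j (PAIR k (PAIR e (PAIR A y))).
Definition JJ x := UNPAIR1 x.
Definition JK x := UNPAIR1 (UNPAIR2 x).
Definition JE x := UNPAIR1 (UNPAIR2 (UNPAIR2 x)).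
Definition JA x := UNPAIR1 (UNPAIR2 (UNPAIR2 (UNPAIR2 x))).
Definition JY x := UNPAIR2 (UNPAIR2 (UNPAIR2 (UNPAIR2 x))).
Arguments JMK : simpl never. Arguments JJ : simpl never. Arguments JK : simpl never.
Arguments JE : simpl never. Arguments JA : simpl never. Arguments JY : simpl never.

Section JudgmentTerms.
Variable g : nat -> nat.

Lemma sem_JMK env j k e A y a : sem g env A = lcode a ->
  sem g env (JMK j k e A y) = jenc (Judg (sem g env j) (sem g env k) (sem g env e) a (sem g env y)).
Proof. intros HA. unfold JMK. rewrite !sem_PAIR, HA. reflexivity. Qed.

Section Fields.
Variables (env : list nat) (x : exp) (j k e : nat) (a : list nat) (y : nat).
Hypothesis Hx : sem g env x = jenc (Judg j k e a y).

Lemma sem_JJ : sem g env (JJ x) = j.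
Proof. unfold JJ. rewrite sem_UNPAIR1, Hx. apply unpair1_npair. Qed.
Lemma sem_JK : sem g env (JK x) = k.
Proof. unfold JK. rewrite sem_UNPAIR1, sem_UNPAIR2, Hx. cbn [jenc]. rewrite !unpair2_npair, unpair1_npair. reflexivity. Qed.
Lemma sem_JE : sem g env (JE x) = e.
Proof. unfold JE. rewrite sem_UNPAIR1, !sem_UNPAIR2, Hx. cbn [jenc]. rewrite !unpair2_npair, unpair1_npair. reflexivity. Qed.
Lemma sem_JA : sem g env (JA x) = lcode a.
Proof. unfold JA. rewrite sem_UNPAIR1, !sem_UNPAIR2, Hx. cbn [jenc]. rewrite !unpair2_npair, unpair1_npair. reflexivity. Qed.
Lemma sem_JY : sem g env (JY x) = y.
Proof. unfold JY. rewrite !sem_UNPAIR2, Hx. cbn [jenc]. rewrite !unpair2_npair. reflexivity. Qed.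

End Fields.

Lemma truthy_MEM_judg env x c L J : sem g env c = Lcode L -> sem g env x = jenc J ->
  truthy (sem g env (MEM x c)) <-> In J L.
Proof. intros Hc Hx. rewrite (truthy_MEM _ _ _ _ _ Hc), Hx. apply in_map_jenc. Qed.

Lemma truthy_EXL_judg env m p body L : length env = m -> nth p env 0 = Lcode L ->
  truthy (sem g env (EXL m p body)) <->
  exists J, In J L /\ truthy (sem g (jenc J :: env) body).
Proof.
  intros Hm Hp. rewrite (truthy_EXL _ _ _ _ _ _ Hm Hp). split.
  - intros [z [(J & <- & HJ)%in_map_iff Hb]]. eauto.
  - intros [J [HJ Hb]]. exists (jenc J). split; [apply in_map|]; auto.
Qed.

Lemma truthy_FORL_judg env m p body L : length env = m -> nth p env 0 = Lcode L ->
  truthy (sem g env (FORL m p body)) <->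
  forall J, In J L -> truthy (sem g (jenc J :: env) body).
Proof.
  intros Hm Hp. rewrite (truthy_FORL _ _ _ _ _ _ Hm Hp). split.
  - intros H J HJ. apply H, in_map, HJ.
  - intros H z (J & <- & HJ)%in_map_iff. auto.
Qed.

End JudgmentTerms.

Section Checker.
Variables (Y : nat -> bool) (cbase cstep : code) (cfuns : list code).

(* The checks below run in the environment [j; k; e; lcode a; y; Lcode L] of
   a judgment [Judg j k e a y] and a candidate derivation [L]. *)
Definition QUERY : exp :=
  let arg := LCONS (DIV2 (LHD (Var 3))) (Cst 0) in
  IFZ (EVEN (LHD (Var 3)))
    (IFZ (Var 1) (JMK (Cst 0) (Cst 0) (Cst (enc cbase)) arg (Var 4))
                 (JMK (Cst 1) (PRED (Var 1)) (Cst (enc cstep)) arg (Var 4)))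
    (JMK (Cst 0) (Cst 0) (NTH (Var 0) (Cst (lcode (map enc cfuns)))) arg (Var 4)).

Definition CHK_ORAC : exp :=
  IFZ (Var 0) (EQB (Var 4) (Orc (LHD (Var 3)))) (MEM QUERY (Var 5)).

Definition COMP_WITNESS : exp :=
  ANDL [EQB (JJ (Var 0)) (Var 1); EQB (JK (Var 0)) (Var 2);
                 EQB (JE (Var 0)) (UNPAIR1 (UNPAIR2 (Var 3))); EQB (JY (Var 0)) (Var 5);
                 EQB (LEN (JA (Var 0))) (LEN (UNPAIR2 (UNPAIR2 (Var 3))));
                 FORB 7 (LEN (JA (Var 0)))
                   (MEM (JMK (Var 2) (Var 3) (NTH (Var 0) (UNPAIR2 (UNPAIR2 (Var 4)))) (Var 5)
                             (NTH (Var 0) (JA (Var 1)))) (Var 7))].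

Definition CHK_COMP : exp := EXL 6 5 COMP_WITNESS.

Definition PREC_WITNESS : exp :=
  ANDL [EQB (JJ (Var 0)) (Var 1); EQB (JK (Var 0)) (Var 2); EQB (JE (Var 0)) (Var 3);
        EQB (JA (Var 0)) (LCONS (PRED (LHD (Var 4))) (LTL (Var 4)));
        MEM (JMK (Var 1) (Var 2) (UNPAIR2 (UNPAIR2 (Var 3)))
               (LCONS (PRED (LHD (Var 4))) (LCONS (JY (Var 0)) (LTL (Var 4)))) (Var 5))
            (Var 6)].

Definition CHK_PREC : exp :=
  IFZ (Var 3) (Cst 0)
    (IFZ (LHD (Var 3))
       (MEM (JMK (Var 0) (Var 1) (UNPAIR1 (UNPAIR2 (Var 2))) (LTL (Var 3)) (Var 4)) (Var 5))
       (EXL 6 5 PREC_WITNESS)).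

Definition MIN_WITNESS : exp :=
  ANDL [EQB (JJ (Var 0)) (Var 2); EQB (JK (Var 0)) (Var 3); EQB (JE (Var 0)) (UNPAIR2 (Var 4));
        EQB (JA (Var 0)) (LCONS (Var 1) (Var 5)); NOT (EQB (JY (Var 0)) (Cst 0))].

Definition CHK_MIN : exp :=
  AND (MEM (JMK (Var 0) (Var 1) (UNPAIR2 (Var 2)) (LCONS (Var 4) (Var 3)) (Cst 0)) (Var 5))
      (FORB 6 (Var 4) (EXL 7 6 MIN_WITNESS)).

Fixpoint dispatch (tag : nat) (checks : list exp) : exp :=
  match checks with
  | [] => Cst 0
  | c :: checks => OR (AND (EQB (UNPAIR1 (Var 2)) (Cst tag)) c) (dispatch (S tag) checks)
  end.

Definition CHECK : exp :=
  dispatch 0 [EQB (Var 4) (Cst 0); EQB (Var 4) (Suc (LHD (Var 3)));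
              EQB (Var 4) (NTH (UNPAIR2 (Var 2)) (Var 3));
              CHK_ORAC; CHK_COMP; CHK_PREC; CHK_MIN].

Variables (j k e : nat) (a : list nat) (y : nat) (L : list judgment).
Local Notation env6 := [j; k; e; lcode a; y; Lcode L].

Let HA : sem (chi Y) env6 (Var 3) = lcode a := eq_refl.
Let HL : sem (chi Y) env6 (Var 5) = Lcode L := eq_refl.

Lemma sem_QUERY : sem (chi Y) env6 QUERY = jenc (query cbase cstep cfuns j k (hd 0 a) y).
Proof.
  unfold QUERY, query. cbv zeta.
  rewrite sem_IFZ, sem_EVEN, (sem_LHD _ _ _ _ HA).
  assert (Harg : sem (chi Y) env6 (LCONS (DIV2 (LHD (Var 3))) (Cst 0)) = lcode [Nat.div2 (hd 0 a)]).
  { rewrite (sem_LCONS _ env6 _ (Cst 0) [] eq_refl), sem_DIV2, (sem_LHD _ _ _ _ HA). reflexivity. }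
  destruct (Nat.even (hd 0 a)); [|rewrite sem_IFZ; destruct k]; cbn [sem nth Nat.eqb];
    rewrite (sem_JMK _ _ _ _ _ _ _ _ Harg); cbn [sem nth]; rewrite ?sem_PRED, ?(sem_NTH _ env6 (Var 0) (Cst (lcode (map enc cfuns))) _ eq_refl), ?nth_map_enc;
    reflexivity.
Qed.

Lemma truthy_CHK_ORAC :
  truthy (sem (chi Y) env6 CHK_ORAC) <->
  (if j =? 0 then y = chi Y (hd 0 a) else In (query cbase cstep cfuns j k (hd 0 a) y) L).
Proof.
  unfold CHK_ORAC. rewrite sem_IFZ. cbn [sem nth].
  destruct (j =? 0).
  - rewrite truthy_EQB. cbn [sem nth]. rewrite (sem_LHD _ _ _ _ HA). reflexivity.
  - apply (truthy_MEM_judg _ _ _ _ _ _ HL sem_QUERY).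
Qed.

Lemma truthy_COMP_WITNESS es j' k' e' bs y' : lcode es = unpair2 (unpair2 e) ->
  truthy (sem (chi Y) (jenc (Judg j' k' e' bs y') :: env6) COMP_WITNESS) <->
  j' = j /\ k' = k /\ e' = unpair1 (unpair2 e) /\ y' = y /\ length bs = length es /\
  forall i, i < length bs -> In (Judg j k (nth i es 0) a (nth i bs 0)) L.
Proof.
  intros Hes.
  pose proof (eq_refl : sem (chi Y) (jenc (Judg j' k' e' bs y') :: env6) (Var 0) =
                        jenc (Judg j' k' e' bs y')) as HJ.
  assert (HES : forall env, nth 4 env 0 = e ->
            sem (chi Y) env (UNPAIR2 (UNPAIR2 (Var 4))) = lcode es).
  { intros env He. rewrite !sem_UNPAIR2. cbn [sem]. rewrite He. auto. }
  unfold COMP_WITNESS. rewrite truthy_ANDL, !Forall_cons_iff, !truthy_EQB.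
  rewrite (sem_JJ _ _ _ _ _ _ _ _ HJ), (sem_JK _ _ _ _ _ _ _ _ HJ),
    (sem_JE _ _ _ _ _ _ _ _ HJ), (sem_JY _ _ _ _ _ _ _ _ HJ),
    (sem_LEN _ _ _ bs (sem_JA _ _ _ _ _ _ _ _ HJ)).
  rewrite (sem_LEN _ _ _ es) by (rewrite !sem_UNPAIR2; symmetry; exact Hes).
  rewrite (truthy_FORB _ _ 7) by reflexivity.
  rewrite (sem_LEN _ _ _ bs (sem_JA _ _ _ _ _ _ _ _ HJ)).
  match goal with |- context [forall i, i < _ -> truthy (sem _ (i :: ?env7) ?M)] =>
    assert (Hmem : forall i, truthy (sem (chi Y) (i :: env7) M) <->
                             In (Judg j k (nth i es 0) a (nth i bs 0)) L) end.
  { intros i. apply truthy_MEM_judg; [reflexivity|].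
    rewrite (sem_JMK _ _ _ _ _ _ _ a) by reflexivity. cbn [sem nth].
    rewrite (sem_NTH _ _ _ _ es) by (apply HES; reflexivity).
    rewrite (sem_NTH _ _ _ _ bs) by (apply (sem_JA _ _ _ j' k' e' bs y'); reflexivity).
    reflexivity. }
  setoid_rewrite Hmem. cbn [sem nth]. rewrite sem_UNPAIR1, sem_UNPAIR2. cbn [sem nth].
  split.
  - intros (-> & -> & -> & -> & Hl & Hall & _). auto 7.
  - intros (-> & -> & -> & -> & Hl & Hall). repeat split; auto.
Qed.

Lemma truthy_CHK_COMP :
  truthy (sem (chi Y) env6 CHK_COMP) <->
  exists es bs, lcode es = unpair2 (unpair2 e) /\ length bs = length es /\
    In (Judg j k (unpair1 (unpair2 e)) bs y) L /\
    forall i, i < length es -> In (Judg j k (nth i es 0) a (nth i bs 0)) L.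
Proof.
  destruct (lcode_surj (unpair2 (unpair2 e))) as [es Hes].
  unfold CHK_COMP. rewrite (truthy_EXL_judg _ _ 6 5 _ L) by reflexivity. split.
  - intros [[j' k' e' bs y'] [Hin Hw]].
    apply (truthy_COMP_WITNESS es) in Hw as (-> & -> & -> & -> & Hl & Hall); [|exact Hes].
    exists es, bs. rewrite <- Hl. auto.
  - intros (es' & bs & Hes' & Hl & Hin & Hall).
    rewrite <- Hes in Hes'. apply lcode_inj in Hes'. subst es'.
    exists (Judg j k (unpair1 (unpair2 e)) bs y). split; [exact Hin|].
    apply (truthy_COMP_WITNESS es); [exact Hes|]. rewrite Hl. auto 7.
Qed.

Lemma truthy_PREC_WITNESS j' k' e' a'' z :
  truthy (sem (chi Y) (jenc (Judg j' k' e' a'' z) :: env6) PREC_WITNESS) <->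
  j' = j /\ k' = k /\ e' = e /\ a'' = pred (hd 0 a) :: tl a /\
  In (Judg j k (unpair2 (unpair2 e)) (pred (hd 0 a) :: z :: tl a) y) L.
Proof.
  pose proof (eq_refl : sem (chi Y) (jenc (Judg j' k' e' a'' z) :: env6) (Var 0) =
                        jenc (Judg j' k' e' a'' z)) as HJ.
  pose proof (eq_refl : sem (chi Y) (jenc (Judg j' k' e' a'' z) :: env6) (Var 4) = lcode a)
    as HA'.
  assert (Hn : sem (chi Y) (jenc (Judg j' k' e' a'' z) :: env6) (PRED (LHD (Var 4))) =
               pred (hd 0 a)) by (rewrite sem_PRED, (sem_LHD _ _ _ _ HA'); reflexivity).
  pose proof (sem_LTL _ _ _ _ HA') as Htl.
  unfold PREC_WITNESS. rewrite truthy_ANDL, !Forall_cons_iff, !truthy_EQB.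
  rewrite (sem_JJ _ _ _ _ _ _ _ _ HJ), (sem_JK _ _ _ _ _ _ _ _ HJ), (sem_JE _ _ _ _ _ _ _ _ HJ),
    (sem_JA _ _ _ _ _ _ _ _ HJ), (sem_LCONS _ _ _ _ _ Htl), Hn.
  rewrite (truthy_MEM_judg _ _ _ _ L
             (Judg j k (unpair2 (unpair2 e)) (pred (hd 0 a) :: z :: tl a) y)).
  2: reflexivity.
  2: { rewrite (sem_JMK _ _ _ _ _ _ _ (pred (hd 0 a) :: z :: tl a)).
       { cbn [sem nth]. rewrite !sem_UNPAIR2. reflexivity. }
       rewrite (sem_LCONS _ _ _ _ (z :: tl a)), Hn; [reflexivity|].
       rewrite (sem_LCONS _ _ _ _ _ Htl), (sem_JY _ _ _ _ _ _ _ _ HJ). reflexivity. }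
  cbn [sem nth]. split.
  - intros (-> & -> & -> & Ha%lcode_inj & Hin & _). auto.
  - intros (-> & -> & -> & -> & Hin). repeat split; auto.
Qed.

Lemma truthy_CHK_PREC :
  truthy (sem (chi Y) env6 CHK_PREC) <->
  match a with
  | [] => False
  | 0 :: a' => In (Judg j k (unpair1 (unpair2 e)) a' y) L
  | S n :: a' => exists z, In (Judg j k e (n :: a') z) L /\
                           In (Judg j k (unpair2 (unpair2 e)) (n :: z :: a') y) L
  end.
Proof.
  unfold CHK_PREC. rewrite !sem_IFZ, (sem_LHD _ _ _ _ HA). cbn [sem nth].
  destruct (Nat.eqb_spec (lcode a) 0) as [E0|E0]; [|destruct (Nat.eqb_spec (hd 0 a) 0) as [E1|E1]].
  - replace a with (@nil nat) by (apply (lcode_inj []); auto). unfold truthy. tauto.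
  - rewrite (truthy_MEM_judg _ _ _ _ L (Judg j k (unpair1 (unpair2 e)) (tl a) y)).
    2: reflexivity.
    2: { rewrite (sem_JMK _ _ _ _ _ _ _ (tl a)) by apply (sem_LTL _ _ _ _ HA).
         cbn [sem nth]. rewrite sem_UNPAIR1, sem_UNPAIR2. reflexivity. }
    destruct a as [|[|n] a']; simpl in *; [contradiction | reflexivity | discriminate].
  - rewrite (truthy_EXL_judg _ _ 6 5 _ L) by reflexivity.
    split.
    + intros [[j' k' e' a'' z] [Hin Hw%truthy_PREC_WITNESS]].
      destruct Hw as (-> & -> & -> & -> & Hin').
      destruct a as [|[|n] a']; simpl in *; [contradiction | contradiction | eauto].
    + intros Hex. assert (Hw : exists z, In (Judg j k e (pred (hd 0 a) :: tl a) z) L /\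
          In (Judg j k (unpair2 (unpair2 e)) (pred (hd 0 a) :: z :: tl a) y) L)
        by (destruct a as [|[|n] a']; simpl in *; [contradiction | contradiction | exact Hex]).
      destruct Hw as [z [Hin Hin']]. exists (Judg j k e (pred (hd 0 a) :: tl a) z).
      split; [exact Hin|]. apply truthy_PREC_WITNESS. auto.
Qed.

Lemma truthy_MIN_WITNESS m j' k' e' a'' z :
  truthy (sem (chi Y) (jenc (Judg j' k' e' a'' z) :: m :: env6) MIN_WITNESS) <->
  j' = j /\ k' = k /\ e' = unpair2 e /\ a'' = m :: a /\ z <> 0.
Proof.
  pose proof (eq_refl : sem (chi Y) (jenc (Judg j' k' e' a'' z) :: m :: env6) (Var 0) =
                        jenc (Judg j' k' e' a'' z)) as HJ.
  pose proof (eq_refl : sem (chi Y) (jenc (Judg j' k' e' a'' z) :: m :: env6) (Var 5) = lcode a)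
    as HA'.
  unfold MIN_WITNESS. rewrite truthy_ANDL, !Forall_cons_iff, !truthy_EQB, truthy_NOT, sem_EQB.
  rewrite (sem_JJ _ _ _ _ _ _ _ _ HJ), (sem_JK _ _ _ _ _ _ _ _ HJ), (sem_JE _ _ _ _ _ _ _ _ HJ),
    (sem_JA _ _ _ _ _ _ _ _ HJ), (sem_JY _ _ _ _ _ _ _ _ HJ), (sem_LCONS _ _ _ _ _ HA'),
    sem_UNPAIR2.
  cbn [sem nth]. split.
  - intros (-> & -> & -> & Ha%lcode_inj & Hz & _). destruct z; [discriminate|]. auto.
  - intros (-> & -> & -> & -> & Hz). destruct z; [contradiction|]. repeat split; auto.
Qed.

Lemma truthy_CHK_MIN :
  truthy (sem (chi Y) env6 CHK_MIN) <->
  In (Judg j k (unpair2 e) (y :: a) 0) L /\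
  forall m, m < y -> exists z, In (Judg j k (unpair2 e) (m :: a) (S z)) L.
Proof.
  unfold CHK_MIN. rewrite truthy_AND.
  rewrite (truthy_MEM_judg _ _ _ _ L (Judg j k (unpair2 e) (y :: a) 0)); [|reflexivity|].
  2: { rewrite (sem_JMK _ _ _ _ _ _ _ (y :: a)) by exact (sem_LCONS _ _ (Var 4) _ _ HA).
       cbn [sem nth]. rewrite sem_UNPAIR2. reflexivity. }
  rewrite (truthy_FORB _ _ 6) by reflexivity. cbn [sem nth].
  assert (Hm : forall m, truthy (sem (chi Y) (m :: env6) (EXL 7 6 MIN_WITNESS)) <->
                         exists z, In (Judg j k (unpair2 e) (m :: a) (S z)) L).
  { intros m. rewrite (truthy_EXL_judg _ _ 7 6 _ L) by reflexivity. split.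
    - intros [[j' k' e' a'' z] [Hin Hw%truthy_MIN_WITNESS]].
      destruct Hw as (-> & -> & -> & -> & Hz). destruct z as [|z]; [contradiction|]. eauto.
    - intros [z Hin]. exists (Judg j k (unpair2 e) (m :: a) (S z)). split; [exact Hin|].
      apply truthy_MIN_WITNESS. auto. }
  apply and_iff_compat_l. split; intros H m Hlt; apply Hm; auto.
Qed.

Lemma truthy_dispatch tag checks :
  truthy (sem (chi Y) env6 (dispatch tag checks)) <->
  tag <= unpair1 e /\
  exists c, nth_error checks (unpair1 e - tag) = Some c /\ truthy (sem (chi Y) env6 c).
Proof.
  revert tag. induction checks as [|c checks IH]; intros tag; cbn [dispatch].
  - split; [intros H; contradiction H; reflexivity|].
    intros [_ [c [Hc _]]]. destruct (unpair1 e - tag); discriminate.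
  - rewrite truthy_OR, truthy_AND, truthy_EQB, IH, sem_UNPAIR1. cbn [sem nth]. split.
    + intros [[Etag Hc] | [Hle [c' [Hc' Hv]]]].
      * rewrite Etag, Nat.sub_diag. split; [lia|]. exists c. auto.
      * split; [lia|]. exists c'. replace (unpair1 e - tag) with (S (unpair1 e - S tag)) by lia.
        auto.
    + intros [Hle [c' [Hc' Hv]]]. destruct (Nat.eq_dec (unpair1 e) tag) as [Etag|Ne].
      * left. rewrite Etag, Nat.sub_diag in Hc'. injection Hc' as ->. auto.
      * right. split; [lia|]. exists c'.
        replace (unpair1 e - tag) with (S (unpair1 e - S tag)) in Hc' by lia. auto.
Qed.

Lemma truthy_CHECK :
  truthy (sem (chi Y) env6 CHECK) <-> justified Y cbase cstep cfuns L (Judg j k e a y).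
Proof.
  unfold CHECK. rewrite truthy_dispatch, Nat.sub_0_r. cbn [justified].
  assert (Hsome : forall c P, (truthy (sem (chi Y) env6 c) <-> P) ->
            (0 <= unpair1 e /\ exists c', Some c = Some c' /\ truthy (sem (chi Y) env6 c')) <-> P).
  { intros c P <-. split; [intros [_ [c' [[= <-] H]]]; exact H | intros H; split; [lia | eauto]]. }
  destruct (unpair1 e) as [|[|[|[|[|[|[|t]]]]]]]; cbn [nth_error]; try apply Hsome.
  - apply truthy_EQB.
  - rewrite truthy_EQB. cbn [sem nth]. rewrite (sem_LHD _ _ _ _ HA). reflexivity.
  - rewrite truthy_EQB, (sem_NTH _ _ _ _ _ HA), sem_UNPAIR2. reflexivity.
  - apply truthy_CHK_ORAC.
  - apply truthy_CHK_COMP.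
  - apply truthy_CHK_PREC.
  - apply truthy_CHK_MIN.
  - split; [intros [_ [c [Hc _]]]; destruct t; discriminate | contradiction].
Qed.

End Checker.

Lemma ev_least_search g e env w :
  truthy (sem g (w :: env) e) -> (forall m, m < w -> ~ truthy (sem g (m :: env) e)) ->
  ev (tot g) (cMin (compile (S (length env)) (NOT e))) env w.
Proof.
  intros Hw Hbelow. constructor.
  - replace 0 with (sem g (w :: env) (NOT e)) by
      (rewrite sem_NOT; destruct (Nat.eqb_spec (sem g (w :: env) e) 0); [contradiction | reflexivity]).
    apply (compile_correct g (NOT e) (w :: env)).
  - intros m Hm. exists 0.
    replace 1 with (sem g (m :: env) (NOT e)) by
      (rewrite sem_NOT; destruct (Nat.eqb_spec (sem g (m :: env) e) 0);
       [reflexivity | exfalso; apply (Hbelow m Hm); assumption]).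
    apply (compile_correct g (NOT e) (m :: env)).
Qed.

Section Search.
Variables (Y : nat -> bool) (cbase cstep : code) (cfuns : list code).

Definition LOCAL : exp :=
  Sub (CHECK cbase cstep cfuns) ⟨JJ (Var 0), JK (Var 0), JE (Var 0), JA (Var 0), JY (Var 0), Var 1⟩.

Lemma truthy_LOCAL J L :
  truthy (sem (chi Y) [jenc J; Lcode L] LOCAL) <-> justified Y cbase cstep cfuns L J.
Proof.
  destruct J as [j k e a y].
  pose proof (eq_refl : sem (chi Y) [jenc (Judg j k e a y); Lcode L] (Var 0) =
                        jenc (Judg j k e a y)) as HJ.
  assert (Henv : sems (chi Y) [jenc (Judg j k e a y); Lcode L]
                   ⟨JJ (Var 0), JK (Var 0), JE (Var 0), JA (Var 0), JY (Var 0), Var 1⟩ =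
                 [j; k; e; lcode a; y; Lcode L]).
  { cbn [sems]. rewrite (sem_JJ _ _ _ _ _ _ _ _ HJ), (sem_JK _ _ _ _ _ _ _ _ HJ),
      (sem_JE _ _ _ _ _ _ _ _ HJ), (sem_JA _ _ _ _ _ _ _ _ HJ), (sem_JY _ _ _ _ _ _ _ _ HJ).
    reflexivity. }
  unfold LOCAL. rewrite sem_Sub, Henv. apply truthy_CHECK.
Qed.

Definition DERIVATION : exp := FORL 1 0 LOCAL.

Lemma truthy_DERIVATION L :
  truthy (sem (chi Y) [Lcode L] DERIVATION) <-> derivation Y cbase cstep cfuns L.
Proof.
  unfold DERIVATION. rewrite (truthy_FORL_judg _ _ 1 0 _ L) by reflexivity.
  unfold derivation. split; intros H J HJ; apply truthy_LOCAL, H, HJ.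
Qed.

Variables (j1 j2 x0 v : nat) (c1 c2 : code).

(* Search witnesses are pairs [npair b (Lcode L)]: the bit [b] says which of
   the two judgments the derivation [L] is claimed to contain. *)
Definition GOOD : exp :=
  Sub (AND (Sub DERIVATION ⟨Var 1⟩)
           (IFZ (Var 0)
              (MEM (JMK (Cst j1) (Var 2) (Cst (enc c1)) (LCONS (Cst x0) (Cst 0)) (Cst v)) (Var 1))
              (MEM (JMK (Cst j2) (Var 2) (Cst (enc c2)) (LCONS (Cst x0) (Cst 0)) (Cst v)) (Var 1))))
      ⟨UNPAIR1 (Var 0), UNPAIR2 (Var 0), Var 1⟩.

Definition OUT : exp := IFZ (UNPAIR1 (Var 0)) (Cst 1) (Cst 0).

Definition SEARCH : code := cComp (compile 1 OUT) (ccons (cMin (compile 2 (NOT GOOD))) cnil).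

Lemma truthy_GOOD b L n :
  truthy (sem (chi Y) [npair b (Lcode L); n] GOOD) <->
  derivation Y cbase cstep cfuns L /\
  (if b =? 0 then In (Judg j1 n (enc c1) [x0] v) L else In (Judg j2 n (enc c2) [x0] v) L).
Proof.
  assert (Henv : sems (chi Y) [npair b (Lcode L); n] ⟨UNPAIR1 (Var 0), UNPAIR2 (Var 0), Var 1⟩ =
                 [b; Lcode L; n]).
  { cbn [sems]. rewrite sem_UNPAIR1, sem_UNPAIR2. cbn [sem nth].
    rewrite unpair1_npair, unpair2_npair. reflexivity. }
  unfold GOOD. rewrite sem_Sub, Henv, truthy_AND, sem_Sub. cbn [sems sem nth].
  rewrite truthy_DERIVATION. apply and_iff_compat_l.
  rewrite sem_IFZ. cbn [sem nth].
  destruct (b =? 0); apply truthy_MEM_judg; try reflexivity;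
    rewrite (sem_JMK _ _ _ _ _ _ _ [x0] (sem_LCONS _ _ (Cst x0) (Cst 0) [] eq_refl));
    reflexivity.
Qed.

Lemma turing_le_of_derivations X :
  (forall n, X n = true <-> derivable Y cbase cstep cfuns j1 n c1 [x0] v) ->
  (forall n, X n = false <-> derivable Y cbase cstep cfuns j2 n c2 [x0] v) ->
  turing_le X Y.
Proof.
  intros Htrue Hfalse. exists (enc SEARCH). intros n. apply Phi_enc.
  assert (Hex : exists w, truthy (sem (chi Y) [w; n] GOOD)).
  { destruct (X n) eqn:E; [apply Htrue in E | apply Hfalse in E]; destruct E as [L [HL Hin]];
      [exists (npair 0 (Lcode L)) | exists (npair 1 (Lcode L))]; apply truthy_GOOD; auto. }
  destruct (dec_inh_nat_subset_has_unique_least_element _ (fun w => classic _) Hex)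
    as [w [[Hw Hleast] _]].
  assert (Hsearch : ev (tot (chi Y)) (cMin (compile 2 (NOT GOOD))) [n] w).
  { apply (ev_least_search _ _ [n]); [exact Hw|]. intros m Hm Hgood.
    specialize (Hleast m Hgood). lia. }
  apply (ev_unary _ _ _ _ w); [exact Hsearch|].
  replace (chi X n) with (sem (chi Y) [w] OUT); [apply (compile_correct _ _ [w])|].
  destruct (Lcode_surj (unpair2 w)) as [L HL].
  rewrite <- (npair_unpair w), <- HL in Hw |- *.
  apply truthy_GOOD in Hw as [Hder Hin].
  unfold OUT, chi. rewrite sem_IFZ, sem_UNPAIR1. cbn [sem nth]. rewrite unpair1_npair.
  destruct (unpair1 w =? 0).
  - rewrite (proj2 (Htrue n)); [reflexivity | exists L; auto].
  - rewrite (proj2 (Hfalse n)); [reflexivity | exists L; auto].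
Qed.

End Search.

(** * An embedding gives Turing reducibility *)

Definition diverge : code := cMin cSucc.

Lemma not_ev_diverge o a y : ~ ev o diverge a y.
Proof. intros H. inversion H as [| | | | | | |? ? ? H0 _]. inversion H0. Qed.

Lemma comp_part_code Y f :
  comp_part Y f -> exists c, forall x y, f x = Some y <-> ev (tot (chi Y)) c [x] y.
Proof.
  intros [e He]. destruct (classic (exists c, enc c = e)) as [[c <-]|Hnone].
  - exists c. intros x y. rewrite He. apply Phi_enc.
  - exists diverge. intros x y. rewrite He. split.
    + intros [c [Hc _]]. exfalso. eauto.
    + intros H. contradiction (not_ev_diverge _ _ _ H).
Qed.

Lemma appB_code f :
  exists c, forall h k, appB f h k -> forall x y, k x = Some y <-> ev (join f h) c [x] y.
Proof.
  destruct (classic (exists c, f 0 = Some (enc c))) as [[c Hc]|Hnone].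
  - exists c. intros h k Happ x y. rewrite (Happ x y). split.
    + intros [e [He HP]]. rewrite Hc in He. injection He as <-. apply Phi_enc, HP.
    + intros H. exists (enc c). split; [exact Hc | apply Phi_enc, H].
  - exists diverge. intros h k Happ x y. rewrite (Happ x y). split.
    + intros [e [He [c [<- _]]]]. exfalso. eauto.
    + intros H. contradiction (not_ev_diverge _ _ _ H).
Qed.

Lemma ev_cZero_iff o x y : tot (fun _ => 0) x = Some y <-> ev o cZero [x] y.
Proof.
  split; [intros [= <-]; constructor | intros H; inversion H; reflexivity].
Qed.

(* [fN n] plays the numeral [n], [fS] the successor, and [fT], [fF] answer
   [x0 ↦ v] on [fN n] exactly when [X n] is true, resp. false. *)
Lemma turing_le_of_numerals X Y fS fT fF (fN rT rF : nat -> nat -> option nat) x0 v :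
  comp_part Y fS -> comp_part Y (fN 0) -> comp_part Y fT -> comp_part Y fF ->
  (forall k, appB fS (fN k) (fN (S k))) ->
  (forall n, appB fT (fN n) (rT n)) -> (forall n, appB fF (fN n) (rF n)) ->
  (forall n, X n = true <-> rT n x0 = Some v) -> (forall n, X n = false <-> rF n x0 = Some v) ->
  turing_le X Y.
Proof.
  intros [cS HcS]%comp_part_code [cbase Hbase]%comp_part_code [cT HcT]%comp_part_code
    [cF HcF]%comp_part_code HappS HappT HappF HXT HXF.
  destruct (appB_code fS) as [cstep Hstep], (appB_code fT) as [c1 H1], (appB_code fF) as [c2 H2].
  (* Function slots beyond the list hold the constant zero function, which is
     what the default code [cZero] computes. *)
  set (zero := tot (fun _ => 0)).
  set (fy := fun j => nth j [zero; fS; fT; fF] zero).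
  assert (Hfuns : forall j x y, j <> 0 ->
            fy j x = Some y <-> ev (tot (chi Y)) (nth j [cZero; cS; cT; cF] cZero) [x] y).
  { intros [|[|[|[|j]]]] x y Hj; [contradiction | apply HcS | apply HcT | apply HcF |].
    unfold fy. rewrite !nth_overflow by (simpl; lia). apply ev_cZero_iff. }
  assert (Hstep' : forall k x y, fN (S k) x = Some y <-> ev (join (fy 1) (fN k)) cstep [x] y)
    by (intros k; apply Hstep, HappS).
  apply (turing_le_of_derivations Y cbase cstep [cZero; cS; cT; cF] 2 3 x0 v c1 c2).
  - intros n. rewrite HXT, (H1 _ _ (HappT n)).
    exact (ev_iff_derivable Y cbase cstep _ fy fN Hbase Hstep' Hfuns 2 n c1 [x0] v).
  - intros n. rewrite HXF, (H2 _ _ (HappF n)).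
    exact (ev_iff_derivable Y cbase cstep _ fy fN Hbase Hstep' Hfuns 3 n c2 [x0] v).
Qed.

Definition join_tot_fun (g h : nat -> nat) (q : nat) : nat :=
  if Nat.even q then g (Nat.div2 q) else h (Nat.div2 q).

Lemma join_tot g h : join (tot g) (tot h) = tot (join_tot_fun g h).
Proof.
  apply functional_extensionality. intros q. unfold join, tot, join_tot_fun.
  destruct (Nat.even q); reflexivity.
Qed.

Lemma comp_tot_of_exp X f e : (forall i, sem (chi X) [i] e = f i) -> comp_tot X f.
Proof.
  intros H. exists (enc (compile 1 e)). intros i. apply Phi_enc. rewrite <- H.
  apply (compile_correct _ _ [i]).
Qed.

Lemma appK2_of_exp g h k e :
  g 0 = enc (compile 1 e) -> (forall i, sem (join_tot_fun g h) [i] e = k i) -> appK2 g h k.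
Proof.
  intros H0 H i. rewrite H0, join_tot. apply Phi_enc. rewrite <- H.
  apply (compile_correct _ _ [i]).
Qed.

(* Elements of K2^X: a K2 function [g] runs program [g 0]; data sits at
   positions [>= 1]. *)
Definition numeralK (n : nat) : nat -> nat := fun i => if i =? 1 then n else 0.
Definition constK (c : nat) : nat -> nat := fun _ => c.
Definition progK (X : nat -> bool) (e : exp) : nat -> nat :=
  fun i => if i =? 0 then enc (compile 1 e) else chi X (i - 1).

(* In [join g h], position [3] holds [h 1], the value of a numeral [h], and
   position [2 (n + 1)] holds [g (n + 1)], which is [chi X n] for [g = progK X e]. *)
Definition SUCC_PROG : exp := IFZ (EQB (Var 0) (Cst 1)) (Cst 0) (Suc (Orc (Cst 3))).
Definition BIT : exp := Orc (ADD (Suc (Orc (Cst 3))) (Suc (Orc (Cst 3)))).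
Definition NOT_BIT : exp := SUBT (Cst 1) BIT.

Lemma numeralK_comp X n : comp_tot X (numeralK n).
Proof.
  apply (comp_tot_of_exp X _ (IFZ (EQB (Var 0) (Cst 1)) (Cst 0) (Cst n))). intros i.
  rewrite sem_IFZ, sem_EQB. cbn [sem nth]. unfold numeralK. destruct (i =? 1); reflexivity.
Qed.

Lemma constK_comp X c : comp_tot X (constK c).
Proof. apply (comp_tot_of_exp X _ (Cst c)). reflexivity. Qed.

Lemma progK_comp X e : comp_tot X (progK X e).
Proof.
  apply (comp_tot_of_exp X _ (IFZ (Var 0) (Cst (enc (compile 1 e))) (Orc (PRED (Var 0))))).
  intros [|i]; rewrite sem_IFZ; cbn [sem nth]; [reflexivity|].
  rewrite sem_PRED. cbn [sem nth]. unfold progK. simpl. rewrite Nat.sub_0_r. reflexivity.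
Qed.

Lemma appK2_succ X n : appK2 (progK X SUCC_PROG) (numeralK n) (numeralK (S n)).
Proof.
  apply (appK2_of_exp _ _ _ SUCC_PROG); [reflexivity|]. intros i. unfold SUCC_PROG.
  rewrite sem_IFZ, sem_EQB. cbn [sem nth]. unfold numeralK. destruct (i =? 1); reflexivity.
Qed.

Lemma sem_BIT X e n i : sem (join_tot_fun (progK X e) (numeralK n)) [i] BIT = chi X n.
Proof.
  assert (H3 : join_tot_fun (progK X e) (numeralK n) 3 = n) by reflexivity.
  unfold BIT. cbn [sem]. rewrite sem_ADD. cbn [sem nth]. rewrite H3.
  replace (S n + S n) with (2 * S n) by lia. unfold join_tot_fun.
  rewrite Nat.even_mul, Nat.div2_double. unfold progK. simpl. rewrite Nat.sub_0_r. reflexivity.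
Qed.

Lemma appK2_bit X n :
  appK2 (progK X BIT) (numeralK n) (if X n then constK 1 else constK 0).
Proof.
  apply (appK2_of_exp _ _ _ BIT); [reflexivity|]. intros i.
  rewrite sem_BIT. unfold chi, constK. destruct (X n); reflexivity.
Qed.

Lemma appK2_not_bit X n :
  appK2 (progK X NOT_BIT) (numeralK n) (if X n then constK 0 else constK 1).
Proof.
  apply (appK2_of_exp _ _ _ NOT_BIT); [reflexivity|]. intros i. unfold NOT_BIT.
  rewrite sem_SUBT, sem_BIT. unfold chi, constK. destruct (X n); reflexivity.
Qed.

Lemma embedding_turing_le X Y (F : K2X X -> BY Y) : embedding_K2X_BY X Y F -> turing_le X Y.
Proof.
  intros [Finj Fapp].
  set (f := fun a => proj1_sig (F a)).
  set (kN := fun n => exist _ (numeralK n) (numeralK_comp X n) : K2X X).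
  set (kS := exist _ (progK X SUCC_PROG) (progK_comp X SUCC_PROG) : K2X X).
  set (kA := exist _ (constK 0) (constK_comp X 0) : K2X X).
  set (kB := exist _ (constK 1) (constK_comp X 1) : K2X X).
  assert (Hsep : forall (P Q DT DF : K2X X) x0 v, f P x0 = Some v -> f Q x0 <> Some v ->
            (forall n, appK2 (proj1_sig DT) (numeralK n) (proj1_sig (if X n then P else Q))) ->
            (forall n, appK2 (proj1_sig DF) (numeralK n) (proj1_sig (if X n then Q else P))) ->
            turing_le X Y).
  { intros P Q DT DF x0 v HP HQ HT HF.
    apply (turing_le_of_numerals X Y (f kS) (f DT) (f DF) (fun n => f (kN n))
             (fun n => f (if X n then P else Q)) (fun n => f (if X n then Q else P)) x0 v);
      try (intros; apply (proj2_sig (F _))).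
    - intros k. apply (Fapp kS (kN k) (kN (S k))), appK2_succ.
    - intros n. apply (Fapp DT (kN n)), HT.
    - intros n. apply (Fapp DF (kN n)), HF.
    - intros n. destruct (X n); intuition congruence.
    - intros n. destruct (X n); intuition congruence. }
  assert (HAB : f kA <> f kB).
  { intros E. assert (F kA = F kB) as Hab%Finj.
    { unfold f in E. destruct (F kA) as [u pu], (F kB) as [w pw]. simpl in E. subst w.
      f_equal. apply proof_irrelevance. }
    apply (f_equal (fun a => proj1_sig a 0)) in Hab. discriminate. }
  destruct (not_all_ex_not _ _ (fun H => HAB (functional_extensionality _ _ H))) as [x0 Hx0].
  set (kBIT := exist _ (progK X BIT) (progK_comp X BIT) : K2X X).
  set (kNOT := exist _ (progK X NOT_BIT) (progK_comp X NOT_BIT) : K2X X).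
  assert (HBIT : forall n, appK2 (proj1_sig kBIT) (numeralK n) (proj1_sig (if X n then kB else kA)))
    by (intros n; pose proof (appK2_bit X n); destruct (X n); assumption).
  assert (HNOT : forall n, appK2 (proj1_sig kNOT) (numeralK n) (proj1_sig (if X n then kA else kB)))
    by (intros n; pose proof (appK2_not_bit X n); destruct (X n); assumption).
  destruct (f kA x0) as [v|] eqn:EA.
  - apply (Hsep kA kB kNOT kBIT x0 v); auto; congruence.
  - destruct (f kB x0) as [v|] eqn:EB; [|congruence].
    apply (Hsep kB kA kBIT kNOT x0 v); auto; congruence.
Qed.

Theorem theorem6p13 (X Y : nat -> bool) :
  (exists F : K2X X -> BY Y, embedding_K2X_BY X Y F) <-> turing_le X Y.
Proof.
  split.
  - intros [F HF]. exact (embedding_turing_le X Y F HF).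
  - intros HXY. exists (tot_embedding X Y HXY). apply tot_embedding_spec.
Qed.
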